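(* A linear functional $\phi$ on $ba(\mathcal A)$ is norm continuous if and only if there is a uniformly bounded net $(f_\alpha)_{\alpha\in\mathfrak A}$ in $\mathcal S(\mathcal A)$ which is Cauchy in $L^1(\mu)$ for every $\mu\in ba(\mathcal A)$, with $\limsup_\alpha\|f_\alpha\|_\infty=\|\phi\|$, such that $\phi(\mu)=\lim_\alpha\mu(f_\alpha)$ for all $\mu\in ba(\mathcal A)$.
   Context: $\mathcal A$ algebra of subsets of $\Omega$; $ba(\mathcal A)$ the Banach space of bounded finitely additive real set functions with $\|\mu\|=|\mu|(\Omega)$. $\mathcal S(\mathcal A)$ the $\mathcal A$-simple functions with sup norm; $\mu(f)=\int f\,d\mu$. A net $(f_\alpha)$ of simple functions is Cauchy in $L^1(\mu)$ if for every $\varepsilon>0$ there is $\alpha_0$ with $|\mu|(|f_{\alpha_1}-f_{\alpha_2}|)<\varepsilon$ for all $\alpha_1,\alpha_2\ge\alpha_0$. *)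

From Stdlib Require Import Reals List Classical ClassicalEpsilon.
Open Scope R_scope.
Set Implicit Arguments.

Section BA.
Variable Omega : Type.

Definition full : Omega -> Prop := fun _ => True.
Definition empty_set_ : Omega -> Prop := fun _ => False.
Definition disjoint (E F : Omega -> Prop) := forall x, ~ (E x /\ F x).
Definition union (E F : Omega -> Prop) := fun x => E x \/ F x.
Definition compl (E : Omega -> Prop) := fun x => ~ E x.

Definition algebra (A : (Omega -> Prop) -> Prop) : Prop :=
  A full /\ (forall E, A E -> A (compl E)) /\
  (forall E F, A E -> A F -> A (union E F)).

(* bounded finitely additive real set functions on A; an element of ba(A) is
   represented by its extension by 0 outside A (so representation is unique) *)
Definition ba (A : (Omega -> Prop) -> Prop) (mu : (Omega -> Prop) -> R) : Prop :=
  (forall E F, A E -> A F -> disjoint E F -> mu (union E F) = mu E + mu F) /\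
  (exists M, forall E, A E -> Rabs (mu E) <= M) /\
  (forall E, ~ A E -> mu E = 0).

Definition pairwise_disjoint (l : list (Omega -> Prop)) : Prop :=
  forall i j, (i < j)%nat -> (j < length l)%nat ->
    disjoint (nth i l empty_set_) (nth j l empty_set_).

Definition sumabs (mu : (Omega -> Prop) -> R) (l : list (Omega -> Prop)) : R :=
  fold_right (fun S acc => Rabs (mu S) + acc) 0 l.

Definition tv (A : (Omega -> Prop) -> Prop) (mu : (Omega -> Prop) -> R)
  (E : Omega -> Prop) : R :=
  epsilon (inhabits 0) (fun s => is_lub (fun r => exists l,
     Forall A l /\ Forall (fun S => forall x, S x -> E x) l /\
     pairwise_disjoint l /\ r = sumabs mu l) s).

Definition ba_norm A mu := tv A mu full.

Definition simple (A : (Omega -> Prop) -> Prop) (f : Omega -> R) : Prop :=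
  (exists l : list R, forall x, In (f x) l) /\
  (forall y, A (fun x => f x = y)).

Definition integ (mu : (Omega -> Prop) -> R) (f : Omega -> R) : R :=
  let l := epsilon (inhabits nil)
             (fun l : list R => NoDup l /\ forall x, In (f x) l) in
  fold_right (fun y acc => y * mu (fun x => f x = y) + acc) 0 l.

(* sup norm (sup of {0} u {|f x|}, so that it is 0 on an empty Omega) *)
Definition supnorm (f : Omega -> R) : R :=
  epsilon (inhabits 0) (fun s => is_lub (fun r => r = 0 \/ exists x, r = Rabs (f x)) s).

Definition linear_on_ba A (phi : ((Omega -> Prop) -> R) -> R) : Prop :=
  forall mu nu a b, ba A mu -> ba A nu ->
    phi (fun E => a * mu E + b * nu E) = a * phi mu + b * phi nu.

Definition norm_continuous A (phi : ((Omega -> Prop) -> R) -> R) : Prop :=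
  forall mu, ba A mu -> forall eps, eps > 0 -> exists delta, delta > 0 /\
    forall nu, ba A nu -> ba_norm A (fun E => nu E - mu E) < delta ->
      Rabs (phi nu - phi mu) < eps.

Definition opnorm A (phi : ((Omega -> Prop) -> R) -> R) : R :=
  epsilon (inhabits 0) (fun s => is_lub (fun r => exists mu,
     ba A mu /\ ba_norm A mu <= 1 /\ r = Rabs (phi mu)) s).

End BA.

Definition directed (D : Type) (le : D -> D -> Prop) : Prop :=
  inhabited D /\ (forall a, le a a) /\
  (forall a b c, le a b -> le b c -> le a c) /\
  (forall a b, exists c, le a c /\ le b c).

Definition net_lim (D : Type) (le : D -> D -> Prop) (x : D -> R) (L : R) : Prop :=
  forall eps, eps > 0 -> exists a0, forall a, le a0 a -> Rabs (x a - L) < eps.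

Definition net_limsup (D : Type) (le : D -> D -> Prop) (x : D -> R) (L : R) : Prop :=
  forall eps, eps > 0 ->
    (exists a0, forall a, le a0 a -> x a <= L + eps) /\
    (forall a0, exists a, le a0 a /\ L - eps <= x a).

Definition unif_bounded (D Omega : Type) (f : D -> Omega -> R) : Prop :=
  exists M, forall a x, Rabs (f a x) <= M.

Definition net_cauchy_L1 (Omega : Type) (A : (Omega -> Prop) -> Prop)
  (D : Type) (le : D -> D -> Prop) (mu : (Omega -> Prop) -> R) (f : D -> Omega -> R) : Prop :=
  forall eps, eps > 0 -> exists a0, forall a1 a2, le a0 a1 -> le a0 a2 ->
    integ (tv A mu) (fun x => Rabs (f a1 x - f a2 x)) < eps.

From Stdlib Require Import Reals Lra Lia List Classical ClassicalEpsilon FunctionalExtensionality PropExtensionality.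
Open Scope R_scope.
Set Implicit Arguments.
Unset Strict Implicit.

(* (<=) If phi(mu) = lim mu(f_a) with |f_a| <= M, then |mu(f_a)| <= M ||mu||
   gives |phi(mu)| <= M ||mu||: phi is bounded, hence norm continuous.

   (=>) Let |phi(mu)| <= C ||mu||.  For a positive lam in ba(A) the set function
   tau_lam(E) = phi(lam restricted to E) is finitely additive and dominated by
   C lam.  On a finite A-partition p, the step function d_p with value
   tau_lam(E) / lam(E) on the cell E is bounded by C, and along refinements
   (d_p) is a bounded L^2(lam)-martingale: its energy int d_p^2 dlam increases
   and ||d_s - d_p||_2^2 is the energy increment (Pythagoras).  Hence every
   partition has a refinement beyond which the martingale is eta-settled.
   The net is indexed by pairs (lam, delta), lam growing and delta shrinking,
   and f_(lam,delta) = d_p for a delta-settled partition p.  The central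
   estimate [dens_cross_estimate] bounds the difference between phi(nu) and
   sum_E nu(E)/lam(E) * phi(lam restricted to E) by C times the L^1
   oscillation of the density martingale of nu w.r.t. lam, which is small by
   Cauchy-Schwarz on a settled partition.  This gives mu(f_a) -> phi(mu) and
   the L^1(|mu|) Cauchy property; |f_a| <= ||phi|| together with the
   convergence for ||mu|| <= 1 gives limsup ||f_a||_oo = ||phi||. *)

Lemma set_ext {X : Type} (E F : X -> Prop) : (forall x, E x <-> F x) -> E = F.
Proof. intro H; apply functional_extensionality; intro x; apply propositional_extensionality; auto. Qed.

Lemma Rabs_le_between x y : Rabs x <= y <-> -y <= x <= y.
Proof. unfold Rabs; destruct (Rcase_abs x); split; intros; lra. Qed.

Lemma Rabs_tri a b c : Rabs (a - c) <= Rabs (a - b) + Rabs (b - c).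
Proof. replace (a - c) with ((a - b) + (b - c)) by ring. apply Rabs_triang. Qed.

Lemma le_sqrt_of_sq x y : 0 <= x -> x * x <= y -> x <= sqrt y.
Proof. intros Hx H. rewrite <- (sqrt_Rsqr x Hx). apply sqrt_le_1_alt. unfold Rsqr; lra. Qed.

(* Choice of tolerances: [eta = e^2 / (L + 1)] gives [sqrt (L eta) <= e], and
   [eta = (e / (K + 1))^2 / (L + 1)] gives [K sqrt (L eta) <= e]. *)
Lemma sqrt_tolerance L e : 0 <= L -> 0 < e -> sqrt (L * (e * e / (L + 1))) <= e.
Proof. intros HL He. apply Rle_trans with (sqrt (e * e)); [|rewrite sqrt_square; lra]. apply sqrt_le_1_alt.
  replace (L * (e * e / (L + 1))) with ((e * e) * (L / (L + 1))) by (field; lra).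
  assert (L / (L + 1) <= 1) by (apply Rmult_le_reg_r with (L + 1); [lra|]; unfold Rdiv; rewrite Rmult_assoc, Rinv_l; lra).
  assert (0 <= e * e) by nra. nra. Qed.

Lemma sqrt_tolerance_scaled L K e : 0 <= L -> 0 <= K -> 0 < e ->
  K * sqrt (L * ((e / (K + 1)) * (e / (K + 1)) / (L + 1))) <= e.
Proof. intros HL HK He. assert (0 < e / (K + 1)) by (apply Rdiv_lt_0_compat; lra).
  apply Rle_trans with (K * (e / (K + 1))). apply Rmult_le_compat_l; auto. apply sqrt_tolerance; auto.
  replace (K * (e / (K + 1))) with (e * (K / (K + 1))) by (field; lra).
  assert (K / (K + 1) <= 1) by (apply Rmult_le_reg_r with (K + 1); [lra|]; unfold Rdiv; rewrite Rmult_assoc, Rinv_l; lra).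
  nra. Qed.

Lemma tolerance_pos L e : 0 <= L -> 0 < e -> 0 < e * e / (L + 1).
Proof. intros. apply Rdiv_lt_0_compat; nra. Qed.

Definition lsum {X : Type} (g : X -> R) (l : list X) : R :=
  fold_right (fun a acc => g a + acc) 0 l.

Lemma lsum_cons {X} (g : X -> R) a l : lsum g (a :: l) = g a + lsum g l. Proof. reflexivity. Qed.

Lemma lsum_app {X} (g : X -> R) l1 l2 : lsum g (l1 ++ l2) = lsum g l1 + lsum g l2.
Proof. induction l1; simpl; [ring|]. unfold lsum in *; simpl. rewrite IHl1; ring. Qed.

Lemma lsum_ext {X} (g h : X -> R) l : (forall a, In a l -> g a = h a) -> lsum g l = lsum h l.
Proof. induction l; intro H; [reflexivity|]. rewrite !lsum_cons, H, IHl; auto with datatypes. Qed.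

Lemma lsum_le {X} (g h : X -> R) l : (forall a, In a l -> g a <= h a) -> lsum g l <= lsum h l.
Proof. induction l; intro H; unfold lsum in *; simpl; [lra|].
  specialize (IHl (fun a H' => H a (or_intror H'))). specialize (H a (or_introl eq_refl)). lra. Qed.

Lemma lsum_plus {X} (g h : X -> R) l : lsum (fun a => g a + h a) l = lsum g l + lsum h l.
Proof. induction l; unfold lsum in *; simpl; [ring|]. rewrite IHl; ring. Qed.

Lemma lsum_scal {X} (c : R) (g : X -> R) l : lsum (fun a => c * g a) l = c * lsum g l.
Proof. induction l; unfold lsum in *; simpl; [ring|]. rewrite IHl; ring. Qed.

Lemma lsum_minus {X} (g h : X -> R) l : lsum (fun a => g a - h a) l = lsum g l - lsum h l.
Proof. induction l; unfold lsum in *; simpl; [ring|]. rewrite IHl; ring. Qed.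

Lemma lsum_zero {X} (g : X -> R) l : (forall a, In a l -> g a = 0) -> lsum g l = 0.
Proof. induction l; intro H; [reflexivity|]. rewrite lsum_cons, H, IHl; auto with datatypes. ring. Qed.

Lemma lsum_nonneg {X} (g : X -> R) l : (forall a, In a l -> 0 <= g a) -> 0 <= lsum g l.
Proof. intro H. rewrite <- (@lsum_zero _ (fun _ => 0) l) by auto. apply lsum_le; auto. Qed.

Lemma lsum_abs {X} (g : X -> R) l : Rabs (lsum g l) <= lsum (fun a => Rabs (g a)) l.
Proof. induction l; unfold lsum in *; simpl. rewrite Rabs_R0; lra.
  eapply Rle_trans; [apply Rabs_triang|]. lra. Qed.

Lemma lsum_swap {X Y} (g : X -> Y -> R) l1 l2 :
  lsum (fun a => lsum (fun b => g a b) l2) l1 = lsum (fun b => lsum (fun a => g a b) l1) l2.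
Proof. induction l1; simpl. rewrite lsum_zero; auto.
  change (lsum (fun b => g a b) l2 + lsum (fun a0 => lsum (fun b => g a0 b) l2) l1 =
    lsum (fun b => g a b + lsum (fun a0 => g a0 b) l1) l2).
  rewrite IHl1, <- lsum_plus. reflexivity. Qed.

Lemma lsum_flat_map {X Y} (g : Y -> R) (h : X -> list Y) l :
  lsum g (flat_map h l) = lsum (fun a => lsum g (h a)) l.
Proof. induction l; simpl; auto. rewrite lsum_app, IHl. reflexivity. Qed.

Lemma lsum_map {X Y} (g : Y -> R) (h : X -> Y) l : lsum g (map h l) = lsum (fun a => g (h a)) l.
Proof. induction l; simpl; auto. unfold lsum in *; simpl; rewrite IHl; auto. Qed.

Lemma lsum_single {X} (g : X -> R) l c : NoDup l -> In c l ->
  (forall a, In a l -> a <> c -> g a = 0) -> lsum g l = g c.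
Proof. induction l; intros Hn Hi H; [destruct Hi|]. inversion Hn; subst.
  rewrite lsum_cons. destruct Hi as [<-|Hi].
  - rewrite lsum_zero; [ring|]. intros b Hb. apply H; [auto with datatypes|]. intros ->; contradiction.
  - rewrite IHl; auto with datatypes. rewrite H; [ring|auto with datatypes|]. intros ->; contradiction.
Qed.


Section Subsets.
Variable Omega : Type.
Local Notation T := (Omega -> Prop).

Definition inter (E F : T) : T := fun x => E x /\ F x.
Definition sub (E F : T) := forall x, E x -> F x.
Definition is_empty (E : T) := forall x, ~ E x.

Fixpoint pdisj (l : list T) : Prop :=
  match l with nil => True | E :: l' => (forall F, In F l' -> disjoint E F) /\ pdisj l' end.

Definition bigU (l : list T) : T := fun x => exists E, In E l /\ E x.

Definition meet (l1 l2 : list T) : list T := flat_map (fun E => map (inter E) l2) l1.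

Lemma is_empty_eq E : is_empty E -> E = @empty_set_ Omega.
Proof. intro H; apply set_ext; intro x; unfold empty_set_; split; [apply H|tauto]. Qed.

Lemma nonempty_or_empty E : (exists x, E x) \/ is_empty E.
Proof. destruct (classic (exists x, E x)) as [H|H]; [left; auto|right; intros x Ex; eauto]. Qed.

Lemma pdisj_app l1 l2 : pdisj l1 -> pdisj l2 -> (forall E F, In E l1 -> In F l2 -> disjoint E F) -> pdisj (l1 ++ l2).
Proof. induction l1; simpl; auto. intros [H1 H2] H3 H4. split; auto.
  intros F HF. apply in_app_or in HF. destruct HF; auto. Qed.

Lemma pdisj_map_inter E l : pdisj l -> pdisj (map (inter E) l).
Proof. induction l; simpl; auto. intros [H1 H2]; split; auto.
  intros F HF. apply in_map_iff in HF. destruct HF as [G [<- HG]]. intros x [[_ ?] [_ ?]]. apply (H1 G HG x); auto. Qed.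

Lemma In_meet C l1 l2 : In C (meet l1 l2) <-> exists E F, In E l1 /\ In F l2 /\ C = inter E F.
Proof. unfold meet; rewrite in_flat_map. split.
  - intros [E [HE HC]]. apply in_map_iff in HC. destruct HC as [F [<- HF]]. eauto.
  - intros [E [F [HE [HF ->]]]]. exists E; split; auto. apply in_map; auto. Qed.

Lemma pdisj_meet l1 l2 : pdisj l1 -> pdisj l2 -> pdisj (meet l1 l2).
Proof. induction l1; simpl; auto. intros [H1 H2] H3. apply pdisj_app; auto.
  apply pdisj_map_inter; auto. intros E F HE HF. apply in_map_iff in HE. destruct HE as [G [<- HG]].
  apply In_meet in HF. destruct HF as [E' [F' [HE' [_ ->]]]]. intros x [[? _] [? _]]. apply (H1 E' HE' x); auto. Qed.

Lemma pwd_pdisj l : pairwise_disjoint l -> pdisj l.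
Proof. induction l; simpl; auto. intro H. split.
  - intros F HF. destruct (In_nth l F (@empty_set_ Omega) HF) as [j [Hj <-]].
    apply (H 0%nat (S j)); simpl; lia.
  - apply IHl. intros i j Hij Hj. apply (H (S i) (S j)); simpl; lia. Qed.

Lemma pdisj_pwd l : pdisj l -> pairwise_disjoint l.
Proof. induction l; simpl. intros _ i j _ Hj; simpl in Hj; lia.
  intros [H1 H2] i j Hij Hj. destruct i; destruct j; try lia; simpl in *.
  - apply H1. apply nth_In; lia.
  - apply IHl; auto; lia. Qed.

End Subsets.
Arguments inter {Omega}. Arguments sub {Omega}. Arguments is_empty {Omega}.
Arguments pdisj {Omega}. Arguments bigU {Omega}. Arguments meet {Omega}.

Section Algebra.
Variable Omega : Type.
Variable A : (Omega -> Prop) -> Prop.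
Hypothesis HA : algebra A.
Local Notation T := (Omega -> Prop).
Local Notation fullO := (@full Omega).

Lemma A_full : A fullO. Proof. apply HA. Qed.
Lemma A_compl E : A E -> A (compl E). Proof. apply HA. Qed.
Lemma A_union E F : A E -> A F -> A (union E F). Proof. apply HA. Qed.

Lemma A_empty : A (@empty_set_ Omega).
Proof. replace (@empty_set_ Omega) with (compl fullO). apply A_compl, A_full.
  apply set_ext; unfold compl, full, empty_set_; tauto. Qed.

Lemma A_inter E F : A E -> A F -> A (inter E F).
Proof. intros. replace (inter E F) with (compl (union (compl E) (compl F))).
  apply A_compl, A_union; apply A_compl; auto.
  apply set_ext; unfold compl, union, inter; intro; tauto. Qed.

Lemma A_bigU l : (forall E, In E l -> A E) -> A (bigU l).
Proof. induction l; intro H.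
  - replace (@bigU Omega nil) with (@empty_set_ Omega). apply A_empty.
    apply set_ext; unfold bigU, empty_set_; simpl; firstorder.
  - replace (bigU (a :: l)) with (union a (bigU l)). apply A_union; auto with datatypes.
    apply set_ext; unfold bigU, union; simpl; firstorder (subst; auto).
Qed.

Definition partition (p : list T) :=
  (forall E, In E p -> A E) /\ pdisj p /\ (forall x, exists E, In E p /\ E x).

Definition refines (s p : list T) := forall F, In F s -> exists E, In E p /\ sub F E.

Lemma partition_full : partition (fullO :: nil).
Proof. split; [|split]. intros E [<-|[]]; apply A_full. simpl; split; auto; intros _ [].
  intro x; exists fullO; simpl; unfold full; auto. Qed.

Lemma partition_meet p s : partition p -> partition s -> partition (meet p s).
Proof. intros [H1 [H2 H3]] [K1 [K2 K3]]. split; [|split].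
  - intros C HC; apply In_meet in HC; destruct HC as [E [F [HE [HF ->]]]]. apply A_inter; auto.
  - apply pdisj_meet; auto.
  - intro x. destruct (H3 x) as [E [HE Ex]]; destruct (K3 x) as [F [HF Fx]].
    exists (inter E F); split. apply In_meet; eauto. split; auto. Qed.

Lemma refines_meet_l p s : refines (meet p s) p.
Proof. intros C HC; apply In_meet in HC; destruct HC as [E [F [HE [HF ->]]]]. exists E; split; auto. intros x [? ?]; auto. Qed.

Lemma refines_meet_r p s : refines (meet p s) s.
Proof. intros C HC; apply In_meet in HC; destruct HC as [E [F [HE [HF ->]]]]. exists F; split; auto. intros x [? ?]; auto. Qed.

Lemma refines_trans a b c : refines a b -> refines b c -> refines a c.
Proof. intros H1 H2 F HF. destruct (H1 F HF) as [E [HE S1]]. destruct (H2 E HE) as [G [HG S2]].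
  exists G; split; auto. intros x Hx; auto. Qed.

Lemma ba_comb mu nu a b : ba A mu -> ba A nu -> ba A (fun E => a * mu E + b * nu E).
Proof. intros [H1 [[M1 H2] H3]] [K1 [[M2 K2] K3]]. split; [|split].
  - intros E F HE HF Hd. rewrite H1, K1; auto. ring.
  - exists (Rabs a * M1 + Rabs b * M2). intros E HE. eapply Rle_trans; [apply Rabs_triang|]. rewrite !Rabs_mult.
    apply Rplus_le_compat; apply Rmult_le_compat_l; auto; apply Rabs_pos.
  - intros E HE. rewrite H3, K3; auto. ring. Qed.

Lemma ba_zero : ba A (fun _ => 0).
Proof. split; [|split]. intros; ring. exists 0; intros; rewrite Rabs_R0; lra. auto. Qed.

Lemma ba_scale mu t : ba A mu -> ba A (fun E => t * mu E).
Proof. intro H. replace (fun E => t * mu E) with (fun E => t * mu E + 0 * mu E). apply ba_comb; auto.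
  apply functional_extensionality; intro; ring. Qed.

Lemma ba_sub mu nu : ba A mu -> ba A nu -> ba A (fun E => nu E - mu E).
Proof. intros. replace (fun E => nu E - mu E) with (fun E => 1 * nu E + (-1) * mu E). apply ba_comb; auto.
  apply functional_extensionality; intro; ring. Qed.

Lemma ba_lsum {I} (m : I -> T -> R) l : (forall i, In i l -> ba A (m i)) -> ba A (fun F => lsum (fun i => m i F) l).
Proof. induction l; intro H. apply ba_zero.
  replace (fun F => lsum (fun i => m i F) (a :: l)) with (fun F => 1 * m a F + 1 * lsum (fun i => m i F) l).
  apply ba_comb; auto with datatypes. apply functional_extensionality; intro F. rewrite lsum_cons. ring. Qed.

Section Measure.
Variable mu : T -> R.
Hypothesis Hmu : ba A mu.

Lemma ba_add E F : A E -> A F -> disjoint E F -> mu (union E F) = mu E + mu F.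
Proof. apply Hmu. Qed.

Lemma ba_out E : ~ A E -> mu E = 0. Proof. apply Hmu. Qed.

Lemma ba_is_empty E : is_empty E -> mu E = 0.
Proof. intro H; rewrite (is_empty_eq H).
  pose proof (ba_add A_empty A_empty (fun x (h : empty_set_ x /\ empty_set_ x) => proj1 h)) as Hadd.
  replace (union (@empty_set_ Omega) (@empty_set_ Omega)) with (@empty_set_ Omega) in Hadd. lra.
  apply set_ext; unfold union, empty_set_; tauto. Qed.

Lemma ba_inter_bigU S l : A S -> pdisj l -> (forall E, In E l -> A E) ->
  mu (inter S (bigU l)) = lsum (fun E => mu (inter S E)) l.
Proof. intros HS; induction l; intros Hp HAl.
  - simpl. apply ba_is_empty. intros x [_ [E [[] _]]].
  - rewrite lsum_cons. destruct Hp as [P1 P2].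
    replace (inter S (bigU (a :: l))) with (union (inter S a) (inter S (bigU l))).
    rewrite ba_add. rewrite IHl; auto with datatypes.
    apply A_inter; auto with datatypes. apply A_inter; auto. apply A_bigU; auto with datatypes.
    intros x [[_ ?] [_ [E [HE ?]]]]. apply (P1 E HE x); auto.
    apply set_ext; unfold union, inter, bigU; simpl; firstorder (subst; auto).
Qed.

Lemma ba_partition_sum p S : partition p -> A S -> mu S = lsum (fun E => mu (inter S E)) p.
Proof. intros [H1 [H2 H3]] HS. rewrite <- ba_inter_bigU; auto. f_equal.
  apply set_ext; intro x; unfold inter, bigU; split; [intro Hx; split; auto|tauto]. Qed.

Lemma ba_cell_sum (w : T -> R) p E0 C : pdisj p -> In E0 p -> sub C E0 ->
  lsum (fun E => w E * mu (inter C E)) p = w E0 * mu C.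
Proof. induction p; intros Hp HE0 HC; [destruct HE0|]. destruct Hp as [P1 P2]. rewrite lsum_cons.
  destruct (classic (In E0 p)) as [Hin|Hnin].
  - rewrite IHp; auto. rewrite (@ba_is_empty (inter C a)); [ring|].
    intros x [Cx ax]. apply (P1 E0 Hin x); auto.
  - destruct HE0 as [->|]; [|contradiction].
    rewrite lsum_zero. replace (inter C E0) with C; [ring|].
    apply set_ext; unfold inter; intro x; split; auto; tauto.
    intros E HE. rewrite ba_is_empty; [ring|]. intros x [Cx Ex]. apply (P1 E HE x); auto.
Qed.

End Measure.

Definition pos (la : T -> R) := ba A la /\ forall E, A E -> 0 <= la E.
Definition dominated (mu la : T -> R) := forall E, A E -> Rabs (mu E) <= la E.

Lemma pos_zero : pos (fun _ => 0).
Proof. split. apply ba_zero. intros; lra. Qed.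

Lemma pos_add la lb : pos la -> pos lb -> pos (fun E => la E + lb E).
Proof. intros Ha Hb. split. replace (fun E => la E + lb E) with (fun E => 1 * la E + 1 * lb E).
  apply ba_comb; [apply Ha|apply Hb]. apply functional_extensionality; intro; ring.
  intros E HE. pose proof (proj2 Ha E HE); pose proof (proj2 Hb E HE); lra. Qed.

Lemma pos_full la : pos la -> 0 <= la fullO.
Proof. intro Hl. apply Hl, A_full. Qed.

Lemma pos_dominated la : pos la -> dominated la la.
Proof. intros Hl E HE. rewrite Rabs_right; [lra|apply Rle_ge, Hl; auto]. Qed.

Lemma pos_le_dominated la lb : pos la -> (forall E, A E -> la E <= lb E) ->
  forall E, A E -> Rabs (la E) <= 1 * lb E.
Proof. intros Hl Hle E HE. rewrite Rmult_1_l. apply Rle_trans with (la E); [apply pos_dominated|]; auto. Qed.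

Lemma pos_mono la E F : pos la -> A E -> A F -> sub E F -> la E <= la F.
Proof. intros [Hb Hp] HE HF HEF.
  assert (HD : A (inter F (compl E))) by (apply A_inter; auto; apply A_compl; auto).
  replace (la F) with (la (union E (inter F (compl E)))).
  rewrite (ba_add Hb); auto. pose proof (Hp _ HD). lra. intros x [? [_ ?]]; auto.
  f_equal; apply set_ext; unfold union, inter, compl; intro x; split; [intros [?|[? ?]]; auto|].
  intro Fx. destruct (classic (E x)); auto.
Qed.

Lemma pos_lsum_le la l S : pos la -> pdisj l -> (forall E, In E l -> A E) -> (forall E, In E l -> sub E S) -> A S ->
  lsum la l <= la S.
Proof. intros Hl Hp HAl HS AS. pose proof (ba_inter_bigU (proj1 Hl) AS Hp HAl) as Hsum.
  rewrite (@lsum_ext _ _ la) in Hsum. rewrite <- Hsum. apply pos_mono; auto. apply A_inter; auto. apply A_bigU; auto.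
  intros x [? ?]; auto.
  intros E HE. f_equal. apply set_ext; unfold inter; intro x; split; [tauto|]. intro; split; auto. apply (HS E HE); auto.
Qed.

(* Every measure in ba(A) is dominated by a positive one: with the positive
   variation [pp E = sup {mu F | F in A, F in E}], take [2 pp - mu]. *)
Section Majorant.
Variable mu : T -> R.
Hypothesis Hmu : ba A mu.

Definition pp (E : T) : R := if excluded_middle_informative (A E) then
   epsilon (inhabits 0) (fun s => is_lub (fun r => exists F, A F /\ sub F E /\ r = mu F) s) else 0.

Lemma pp_lub E : A E -> is_lub (fun r => exists F, A F /\ sub F E /\ r = mu F) (pp E).
Proof. intro HE. unfold pp. destruct (excluded_middle_informative (A E)); [|contradiction].
  apply epsilon_spec. destruct Hmu as [_ [[M HM] _]].
  destruct (completeness (fun r => exists F, A F /\ sub F E /\ r = mu F)) as [m Hm].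
  exists M. intros r [F [HF [_ ->]]]. specialize (HM F HF). apply Rabs_le_between in HM; lra.
  exists (mu E). exists E; split; auto; split; auto. intros x; auto. eauto. Qed.

Lemma pp_ge E F : A E -> A F -> sub F E -> mu F <= pp E.
Proof. intros. apply (pp_lub H). exists F; auto. Qed.

Lemma pp_le E b : A E -> (forall F, A F -> sub F E -> mu F <= b) -> pp E <= b.
Proof. intros HE H. apply (pp_lub HE). intros r [F [? [? ->]]]; auto. Qed.

Lemma pp_add E G : A E -> A G -> disjoint E G -> pp (union E G) = pp E + pp G.
Proof. intros HE HG Hd. assert (HEG : A (union E G)) by (apply A_union; auto). apply Rle_antisym.
  - apply pp_le; auto. intros F HF HFs.
    assert (AFE : A (inter F E)) by (apply A_inter; auto). assert (AFG : A (inter F G)) by (apply A_inter; auto).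
    replace F with (union (inter F E) (inter F G)).
    rewrite (ba_add Hmu); auto. pose proof (@pp_ge E (inter F E) HE AFE (fun x h => proj2 h)).
    pose proof (@pp_ge G (inter F G) HG AFG (fun x h => proj2 h)). lra.
    intros x [[? ?] [? ?]]. apply (Hd x); auto.
    apply set_ext; unfold union, inter; intro x; split; [tauto|]. intro Fx. destruct (HFs x Fx); tauto.
  - cut (pp E <= pp (union E G) - pp G). lra.
    apply pp_le; auto. intros F1 HF1 S1. cut (pp G <= pp (union E G) - mu F1). lra.
    apply pp_le; auto. intros F2 HF2 S2. cut (mu (union F1 F2) <= pp (union E G)).
    rewrite (ba_add Hmu); auto. lra. intros x [? ?]. apply (Hd x); auto.
    apply pp_ge; auto. apply A_union; auto. intros x [?|?]; [left|right]; auto.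
Qed.

Lemma pp_nonneg E : A E -> 0 <= pp E.
Proof. intro HE. rewrite <- (ba_is_empty Hmu (E := @empty_set_ Omega)) by (intros x []).
  apply pp_ge; auto. apply A_empty. intros x []. Qed.

Definition majorant := fun E => 2 * pp E - mu E.

Lemma majorant_pos : pos majorant.
Proof. destruct Hmu as [Hadd [[M HM] Hout]]. split; [split; [|split]|].
  - intros E F HE HF Hd. unfold majorant. rewrite pp_add, Hadd; auto. ring.
  - exists (3 * M). intros E HE. unfold majorant. pose proof (pp_nonneg HE). assert (pp E <= M).
    { apply pp_le; auto. intros F HF _. specialize (HM F HF). apply Rabs_le_between in HM; lra. }
    pose proof (HM E HE) as HME. apply Rabs_le_between in HME. apply Rabs_le_between. lra.
  - intros E HE. unfold majorant, pp. destruct (excluded_middle_informative (A E)); [contradiction|]. rewrite Hout; auto; ring.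
  - intros E HE. unfold majorant. pose proof (pp_nonneg HE). pose proof (pp_ge HE HE (fun x h => h)). lra.
Qed.

Lemma majorant_dominates : dominated mu majorant.
Proof. intros E HE. unfold majorant. pose proof (pp_nonneg HE). pose proof (pp_ge HE HE (fun x h => h)).
  apply Rabs_le_between; lra. Qed.

End Majorant.

Lemma ba_majorant mu : ba A mu -> exists la, pos la /\ dominated mu la.
Proof. intro H. exists (majorant mu). split; [apply (majorant_pos H)|apply (majorant_dominates H)]. Qed.

Lemma sumabs_lsum (mu : T -> R) l : sumabs mu l = lsum (fun S => Rabs (mu S)) l.
Proof. reflexivity. Qed.

Definition tv_family (S : T) (l : list T) :=
  Forall A l /\ Forall (fun S' => forall x, S' x -> S x) l /\ pairwise_disjoint l.

Lemma dominated_sumabs mu la S l : pos la -> dominated mu la -> A S -> tv_family S l -> sumabs mu l <= la S.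
Proof. intros Hl Hd AS [H1 [H2 H3]]. apply Rle_trans with (lsum la l).
  - apply lsum_le. intros E HE. apply Hd. rewrite Forall_forall in H1; auto.
  - rewrite Forall_forall in H1, H2. apply pos_lsum_le; auto. apply pwd_pdisj; auto. Qed.

Lemma tv_lub mu S b : (forall l, tv_family S l -> sumabs mu l <= b) ->
  is_lub (fun r => exists l, Forall A l /\ Forall (fun S' => forall x, S' x -> S x) l /\
     pairwise_disjoint l /\ r = sumabs mu l) (tv A mu S).
Proof. intro H. unfold tv. apply epsilon_spec. edestruct completeness as [m Hm]; [| |exists m; exact Hm].
  - exists b. intros r [l [H1 [H2 [H3 ->]]]]. apply H; repeat split; auto.
  - exists 0, nil. split; [constructor|split; [constructor|split]]. intros i j _ Hj; simpl in Hj; lia. reflexivity.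
Qed.

Lemma tv_le mu S b : (forall l, tv_family S l -> sumabs mu l <= b) -> tv A mu S <= b.
Proof. intro H. apply (tv_lub H). intros r [l [H1 [H2 [H3 ->]]]]. apply H; repeat split; auto. Qed.

Lemma tv_le_majorant mu la S : pos la -> dominated mu la -> A S -> tv A mu S <= la S.
Proof. intros. apply tv_le. intros; eapply dominated_sumabs; eauto. Qed.

Lemma tv_ge mu S l : ba A mu -> tv_family S l -> sumabs mu l <= tv A mu S.
Proof. intros Hmu Hl. destruct (ba_majorant Hmu) as [la [Hla Hd]].
  apply (@tv_lub mu S (la fullO)).
  - intros l' Hl'. apply (dominated_sumabs (S := fullO)); auto. apply A_full.
    destruct Hl' as [H1 [H2 H3]]. repeat split; auto. rewrite Forall_forall; intros; unfold full; auto.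
  - destruct Hl as [H1 [H2 H3]]. exists l; auto. Qed.

Lemma tv_nonneg mu S : ba A mu -> 0 <= tv A mu S.
Proof. intro Hmu. apply (tv_ge (l := nil) Hmu). split; [constructor|split; [constructor|]].
  intros i j _ Hj; simpl in Hj; lia. Qed.

Lemma sumabs_le_norm mu l : ba A mu -> Forall A l -> pairwise_disjoint l -> sumabs mu l <= ba_norm A mu.
Proof. intros Hmu H1 H2. apply tv_ge; auto. repeat split; auto. rewrite Forall_forall; intros; unfold full; auto. Qed.

Lemma ba_norm_nonneg mu : ba A mu -> 0 <= ba_norm A mu.
Proof. apply tv_nonneg. Qed.

Lemma ba_norm_zero : ba_norm A (fun _ : T => 0) = 0.
Proof. apply Rle_antisym; [|apply ba_norm_nonneg, ba_zero]. apply tv_le. intros l _.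
  rewrite sumabs_lsum, lsum_zero; [lra|]. intros; apply Rabs_R0. Qed.

Lemma ba_norm_scale mu t : ba A mu -> ba_norm A (fun E => t * mu E) <= Rabs t * ba_norm A mu.
Proof. intro Hmu. apply tv_le. intros l [H1 [H2 H3]]. rewrite sumabs_lsum.
  rewrite (@lsum_ext _ _ (fun S => Rabs t * Rabs (mu S))) by (intros; apply Rabs_mult). rewrite lsum_scal.
  apply Rmult_le_compat_l. apply Rabs_pos. rewrite <- sumabs_lsum. apply sumabs_le_norm; auto. Qed.

Lemma ba_norm_le_refinements mu p b : ba A mu -> partition p ->
  (forall s, partition s -> refines s p -> lsum (fun C => Rabs (mu C)) s <= b) -> ba_norm A mu <= b.
Proof. intros Hmu Hp Hb. apply tv_le. intros l [H1 [_ H3]].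
  set (s0 := l ++ compl (bigU l) :: nil).
  assert (HAl : forall E, In E l -> A E) by (rewrite <- Forall_forall; auto).
  assert (Hs0 : partition s0). { split; [|split].
    - intros E HE. apply in_app_or in HE. destruct HE as [HE|[<-|[]]]; auto. apply A_compl, A_bigU; auto.
    - apply pdisj_app. apply pwd_pdisj; auto. simpl; split; auto; intros _ [].
      intros E F HE [<-|[]]. intros x [Ex Fx]. apply Fx. exists E; auto.
    - intro x. destruct (classic (bigU l x)) as [[E [HE Ex]]|Hn]. exists E; split; auto. apply in_or_app; auto.
      exists (compl (bigU l)); split; auto. apply in_or_app; simpl; auto. }
  eapply Rle_trans; [|apply (Hb (meet s0 p))]. 2: apply partition_meet; auto. 2: apply refines_meet_r.
  apply Rle_trans with (lsum (fun C => Rabs (mu C)) s0).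
  - unfold s0. rewrite lsum_app. pose proof (Rabs_pos (mu (compl (bigU l)))). rewrite sumabs_lsum. simpl; lra.
  - unfold meet. rewrite lsum_flat_map. apply lsum_le. intros G HG. rewrite lsum_map.
    rewrite (ba_partition_sum Hmu Hp (proj1 Hs0 G HG)). apply lsum_abs.
Qed.

Definition rest (mu : T -> R) (E : T) : T -> R :=
  fun F => if excluded_middle_informative (A F) then mu (inter F E) else 0.

Lemma rest_in mu E F : A F -> rest mu E F = mu (inter F E).
Proof. intro HF. unfold rest. destruct (excluded_middle_informative (A F)); [auto|contradiction]. Qed.

Lemma ba_rest mu E : ba A mu -> A E -> ba A (rest mu E).
Proof. intros [H1 [[M H2] H3]] HE. split; [|split].
  - intros F G HF HG Hd. rewrite !rest_in; auto; [|apply A_union; auto].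
    rewrite <- H1. f_equal. apply set_ext; unfold inter, union; intro x; tauto.
    apply A_inter; auto. apply A_inter; auto. intros x [[? _] [? _]]; apply (Hd x); auto.
  - exists M. intros F HF. rewrite rest_in by auto. apply H2, A_inter; auto.
  - intros F HF. unfold rest. destruct (excluded_middle_informative (A F)); [contradiction|reflexivity]. Qed.

Lemma pos_rest la E : pos la -> A E -> pos (rest la E).
Proof. intros [Hb Hp] HE. split. apply ba_rest; auto. intros F HF. rewrite rest_in by auto. apply Hp, A_inter; auto. Qed.

Lemma norm_rest la E : pos la -> A E -> ba_norm A (rest la E) <= la E.
Proof. intros Hl HE. eapply Rle_trans. apply (tv_le_majorant (la := rest la E)).
  apply pos_rest; auto. apply pos_dominated, pos_rest; auto. apply A_full.
  rewrite rest_in by apply A_full. right; f_equal. apply set_ext; unfold inter, full; tauto. Qed.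

(* Simple functions and their integral.  [fval f E] is the value of [f] at
   some point of [E]; it is meaningful when [f] is constant on [E]. *)
Definition fval (f : Omega -> R) (E : T) : R := epsilon (inhabits 0) (fun r => exists x, E x /\ f x = r).

Lemma fval_at f E x : E x -> (forall y, E y -> f y = f x) -> fval f E = f x.
Proof. intros Ex H. unfold fval. destruct (epsilon_spec (inhabits 0) (fun r => exists x, E x /\ f x = r)) as [y [Ey <-]].
  eauto. apply H; auto. Qed.

Definition const_on (p : list T) (f : Omega -> R) := forall E, In E p -> forall x y, E x -> E y -> f x = f y.

Definition vals (f : Omega -> R) := epsilon (inhabits nil) (fun l : list R => NoDup l /\ forall x, In (f x) l).

Lemma vals_spec f : simple A f -> NoDup (vals f) /\ forall x, In (f x) (vals f).
Proof. intros [[l Hl] _]. unfold vals. apply epsilon_spec. exists (nodup Req_dec_T l). split. apply NoDup_nodup.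
  intro x; apply nodup_In; auto. Qed.

Lemma integ_eq mu f : integ mu f = lsum (fun y => y * mu (fun x => f x = y)) (vals f).
Proof. reflexivity. Qed.

Definition lev (f : Omega -> R) := map (fun y => fun x => f x = y) (vals f).

Lemma partition_lev f : simple A f -> partition (lev f).
Proof. intro Hs. destruct (vals_spec Hs) as [Hn Hc]. split; [|split].
  - intros E HE. apply in_map_iff in HE. destruct HE as [y [<- _]]. apply (proj2 Hs).
  - unfold lev. clear Hc. induction Hn as [|a l Ha Hn IH]; simpl; auto. split; auto.
    intros F HF. apply in_map_iff in HF. destruct HF as [y [<- Hy]]. intros x [K1 K2].
    assert (a = y) by congruence. subst. contradiction.
  - intro x. exists (fun z => f z = f x). split; auto. apply in_map_iff. exists (f x); auto. Qed.

Lemma const_lev f : const_on (lev f) f.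
Proof. intros E HE x y Ex Ey. apply in_map_iff in HE. destruct HE as [z [<- _]]. congruence. Qed.

Lemma const_meet_lev f g : const_on (meet (lev f) (lev g)) f /\ const_on (meet (lev f) (lev g)) g.
Proof. split; intros C HC x y Cx Cy; apply In_meet in HC; destruct HC as [E [F [HE [HF ->]]]];
  destruct Cx, Cy; [apply (const_lev HE)|apply (const_lev HF)]; auto. Qed.

Lemma integ_const_on mu f p : ba A mu -> simple A f -> partition p -> const_on p f ->
  integ mu f = lsum (fun E => mu E * fval f E) p.
Proof. intros Hmu Hs Hp Hc. rewrite integ_eq.
  rewrite (@lsum_ext _ _ (fun y => lsum (fun E => y * mu (inter (fun x => f x = y) E)) p)).
  2:{ intros y _. rewrite (ba_partition_sum Hmu Hp (proj2 Hs y)), <- lsum_scal. reflexivity. }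
  rewrite lsum_swap. apply lsum_ext. intros E HE. destruct (vals_spec Hs) as [Hn Hv].
  destruct (nonempty_or_empty E) as [[x0 Ex0]|Hno].
  - rewrite (@lsum_single _ _ (vals f) (f x0)); auto.
    + rewrite (@fval_at f E x0); auto. replace (inter (fun x => f x = f x0) E) with E. ring.
      apply set_ext; unfold inter; intro x; split; [|tauto]. intro Ex; split; auto. apply (Hc E HE); auto.
      intros y Ey; apply (Hc E HE); auto.
    + intros y _ Hy. rewrite (ba_is_empty Hmu); [ring|]. intros x [Hx Ex]. apply Hy. rewrite <- Hx. apply (Hc E HE); auto.
  - rewrite lsum_zero, (ba_is_empty Hmu Hno); [ring|].
    intros y _. rewrite (ba_is_empty Hmu); [ring|]. intros x [_ Ex]; apply (Hno x Ex).
Qed.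

Lemma simple_of_partition f p : partition p -> const_on p f -> simple A f.
Proof. intros [H1 [H2 H3]] Hc. split.
  - exists (map (fval f) p). intro x. destruct (H3 x) as [E [HE Ex]]. apply in_map_iff. exists E; split; auto.
    apply fval_at; auto. intros y Ey; apply (Hc E HE); auto.
  - intro y. replace (fun x => f x = y) with (bigU (filter (fun E => if Req_dec_T (fval f E) y then true else false) p)).
    apply A_bigU. intros E HE. apply filter_In in HE. apply H1; tauto.
    apply set_ext; intro x; unfold bigU; split.
    + intros [E [HE Ex]]. apply filter_In in HE. destruct HE as [HE Hq]. destruct (Req_dec_T (fval f E) y); [|discriminate].
      subst y. symmetry; apply fval_at; auto. intros z Ez; apply (Hc E HE); auto.
    + intro Hx. destruct (H3 x) as [E [HE Ex]]. exists E; split; auto. apply filter_In; split; auto.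
      destruct (Req_dec_T (fval f E) y) as [|n]; auto. exfalso; apply n. rewrite <- Hx. apply fval_at; auto.
      intros z Ez; apply (Hc E HE); auto.
Qed.

Lemma simple_comb (F : R -> R -> R) f g : simple A f -> simple A g -> simple A (fun x => F (f x) (g x)).
Proof. intros Hf Hg. apply (simple_of_partition (p := meet (lev f) (lev g))).
  apply partition_meet; apply partition_lev; auto.
  destruct (const_meet_lev f g) as [H1 H2]. intros C HC x y Cx Cy. rewrite (H1 C HC x y), (H2 C HC x y); auto. Qed.

Lemma simple_map (F : R -> R) f : simple A f -> simple A (fun x => F (f x)).
Proof. intro Hf. apply (simple_comb (fun a _ => F a) Hf Hf). Qed.

Lemma simple_const c : simple A (fun _ => c).
Proof. apply (simple_of_partition partition_full). intros E _ x y _ _; auto. Qed.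

Lemma simple_abs_diff f g : simple A f -> simple A g -> simple A (fun x => Rabs (f x - g x)).
Proof. apply (simple_comb (fun a b => Rabs (a - b))). Qed.

Definition step (p : list T) (g : T -> R) : Omega -> R :=
  fun x => lsum (fun E => if excluded_middle_informative (E x) then g E else 0) p.

Lemma step_at p g E x : pdisj p -> In E p -> E x -> step p g x = g E.
Proof. unfold step. induction p; intros Hp HE Ex; [destruct HE|]. destruct Hp as [P1 P2]. rewrite lsum_cons.
  destruct (classic (In E p)) as [Hin|Hnin].
  - rewrite IHp; auto. destruct (excluded_middle_informative (a x)); [|ring]. exfalso; apply (P1 E Hin x); auto.
  - destruct HE as [->|]; [|contradiction]. destruct (excluded_middle_informative (E x)); [|contradiction].
    rewrite lsum_zero; [ring|]. intros F HF. destruct (excluded_middle_informative (F x)); auto.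
    exfalso; apply (P1 F HF x); auto. Qed.

Lemma const_step p g : pdisj p -> const_on p (step p g).
Proof. intros Hp E HE x y Ex Ey. rewrite (step_at g Hp HE Ex), (step_at g Hp HE Ey); auto. Qed.

Lemma const_step_refines s p g : pdisj p -> refines s p -> const_on s (step p g).
Proof. intros Hp Hr C HC x y Cx Cy. destruct (Hr C HC) as [E [HE HCE]].
  rewrite (step_at g Hp HE (HCE x Cx)), (step_at g Hp HE (HCE y Cy)); auto. Qed.

Lemma simple_step p g : partition p -> simple A (step p g).
Proof. intro Hp. apply (simple_of_partition Hp). apply const_step, Hp. Qed.

Lemma step_comb (F : R -> R -> R) p g h x : partition p ->
  F (step p g x) (step p h x) = step p (fun E => F (g E) (h E)) x.
Proof. intros [_ [Hp Hc]]. destruct (Hc x) as [E [HE Ex]]. rewrite !(step_at _ Hp HE Ex); auto. Qed.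

Lemma integ_step mu p g : ba A mu -> partition p -> integ mu (step p g) = lsum (fun E => mu E * g E) p.
Proof. intros Hmu Hp. rewrite (integ_const_on Hmu (simple_step g Hp) Hp (const_step g (proj1 (proj2 Hp)))).
  apply lsum_ext. intros E HE. destruct (nonempty_or_empty E) as [[x Ex]|Hno].
  - rewrite (@fval_at _ E x Ex), (step_at g (proj1 (proj2 Hp)) HE Ex); auto.
    intros y Ey. rewrite (step_at g (proj1 (proj2 Hp)) HE Ey), (step_at g (proj1 (proj2 Hp)) HE Ex); auto.
  - rewrite (ba_is_empty Hmu Hno). ring. Qed.

Lemma integ_lin mu f g a b : ba A mu -> simple A f -> simple A g ->
  integ mu (fun x => a * f x + b * g x) = a * integ mu f + b * integ mu g.
Proof. intros Hmu Hf Hg. set (p := meet (lev f) (lev g)).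
  assert (Hp : partition p) by (apply partition_meet; apply partition_lev; auto).
  destruct (const_meet_lev f g) as [C1 C2].
  assert (C3 : const_on p (fun x => a * f x + b * g x)).
  { intros C HC x y Cx Cy. rewrite (C1 C HC x y), (C2 C HC x y); auto. }
  rewrite (integ_const_on Hmu (simple_comb (fun u v => a * u + b * v) Hf Hg) Hp C3).
  rewrite (integ_const_on Hmu Hf Hp C1), (integ_const_on Hmu Hg Hp C2), <- !lsum_scal, <- lsum_plus.
  apply lsum_ext. intros E HE. destruct (nonempty_or_empty E) as [[x Ex]|Hno].
  - rewrite !(@fval_at _ E x Ex); try (intros y Ey; first [apply (C1 E HE) | apply (C2 E HE) | apply (C3 E HE)]; auto). ring.
  - rewrite (ba_is_empty Hmu Hno). ring.
Qed.

Lemma integ_add mu f g : ba A mu -> simple A f -> simple A g -> integ mu (fun x => f x + g x) = integ mu f + integ mu g.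
Proof. intros. replace (fun x => f x + g x) with (fun x => 1 * f x + 1 * g x). rewrite integ_lin; auto. ring.
  apply functional_extensionality; intro; ring. Qed.

Lemma integ_sub mu f g : ba A mu -> simple A f -> simple A g -> integ mu (fun x => f x - g x) = integ mu f - integ mu g.
Proof. intros. replace (fun x => f x - g x) with (fun x => 1 * f x + (-1) * g x). rewrite integ_lin; auto. ring.
  apply functional_extensionality; intro; ring. Qed.

Lemma integ_const mu c : ba A mu -> integ mu (fun _ => c) = c * mu fullO.
Proof. intro Hmu. replace (fun _ : Omega => c) with (step (fullO :: nil) (fun _ => c)).
  rewrite (integ_step _ Hmu partition_full). simpl; ring.
  apply functional_extensionality; intro x. unfold step; simpl. destruct (excluded_middle_informative (full x)).
  ring. exfalso; apply n; exact I. Qed.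

Lemma integ_mono la f g : pos la -> simple A f -> simple A g -> (forall x, f x <= g x) -> integ la f <= integ la g.
Proof. intros Hl Hf Hg Hfg. assert (0 <= integ la (fun x => g x - f x)).
  { rewrite (integ_const_on (proj1 Hl) (simple_comb Rminus Hg Hf) (partition_lev (simple_comb Rminus Hg Hf)) (@const_lev _)).
    apply lsum_nonneg. intros E HE. destruct (nonempty_or_empty E) as [[x Ex]|Hno].
    - rewrite (@fval_at _ E x Ex). apply Rmult_le_pos. apply Hl, (proj1 (partition_lev (simple_comb Rminus Hg Hf))); auto.
      specialize (Hfg x); lra. intros y Ey. apply (const_lev HE); auto.
    - rewrite (ba_is_empty (proj1 Hl) Hno). lra. }
  rewrite integ_sub in H; auto; [lra|apply Hl]. Qed.

Lemma integ_nonneg la f : pos la -> simple A f -> (forall x, 0 <= f x) -> 0 <= integ la f.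
Proof. intros Hl Hf Hp. pose proof (integ_mono Hl (simple_const 0) Hf Hp). rewrite integ_const in H; [lra|apply Hl]. Qed.

Lemma integ_abs_dominated nu la u : ba A nu -> pos la -> dominated nu la -> simple A u ->
  Rabs (integ nu u) <= integ la (fun x => Rabs (u x)).
Proof. intros Hn Hl Hd Hu. pose proof (partition_lev Hu) as Hp.
  assert (Ca : const_on (lev u) (fun x => Rabs (u x))). intros E HE x y Ex Ey; rewrite (const_lev HE Ex Ey); auto.
  rewrite (integ_const_on Hn Hu Hp (@const_lev u)), (integ_const_on (proj1 Hl) (simple_map Rabs Hu) Hp Ca).
  eapply Rle_trans; [apply lsum_abs|]. apply lsum_le. intros E HE.
  destruct (nonempty_or_empty E) as [[x Ex]|Hno].
  - rewrite !(@fval_at _ E x Ex). rewrite Rabs_mult. apply Rmult_le_compat_r. apply Rabs_pos. apply Hd. apply (proj1 Hp); auto.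
    intros y Ey; apply (Ca E HE); auto. intros y Ey; apply (const_lev HE); auto.
  - rewrite (ba_is_empty Hn Hno), (ba_is_empty (proj1 Hl) Hno). rewrite Rmult_0_l, Rabs_R0; lra.
Qed.

Lemma integ_cauchy_schwarz la u : pos la -> simple A u ->
  integ la (fun x => Rabs (u x)) * integ la (fun x => Rabs (u x)) <= la fullO * integ la (fun x => u x * u x).
Proof. intros Hl Hu. set (I1 := integ la (fun x => Rabs (u x))). set (I2 := integ la (fun x => u x * u x)).
  set (L := la fullO).
  assert (Hs1 : simple A (fun x => Rabs (u x))) by (apply simple_map; auto).
  assert (Hs2 : simple A (fun x => u x * u x)) by (apply (simple_comb Rmult); auto).
  assert (Hq : forall t, 0 <= I2 - 2 * t * I1 + t * t * L).
  { intro t. replace (I2 - 2 * t * I1 + t * t * L) with (integ la (fun x => (Rabs (u x) - t) * (Rabs (u x) - t))).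
    - apply integ_nonneg; auto. apply (simple_map (fun a => (Rabs a - t) * (Rabs a - t))); auto. intro x; apply Rle_0_sqr.
    - replace (fun x => (Rabs (u x) - t) * (Rabs (u x) - t)) with
        (fun x => 1 * (1 * (u x * u x) + (-2*t) * Rabs (u x)) + 1 * (t*t)).
      rewrite (integ_lin _ _ (proj1 Hl) (simple_comb (fun a b => 1*a + (-2*t)*b) Hs2 Hs1) (simple_const (t*t))).
      rewrite (integ_lin _ _ (proj1 Hl) Hs2 Hs1), integ_const by apply Hl. unfold I1, I2, L. ring.
      apply functional_extensionality; intro x. pose proof (Rsqr_abs (u x)) as Hsq. unfold Rsqr in Hsq. rewrite Hsq; ring. }
  assert (HL : 0 <= L) by (apply pos_full; auto).
  assert (HI1 : 0 <= I1) by (apply integ_nonneg; auto; intro; apply Rabs_pos).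
  destruct (Req_dec_T L 0) as [HL0|HL0].
  - destruct (Req_dec_T I1 0) as [HI0|HI0]. rewrite HI0, HL0; lra.
    specialize (Hq ((I2 + 1) / (2 * I1))). rewrite HL0 in Hq.
    assert (2 * ((I2 + 1) / (2 * I1)) * I1 = I2 + 1) by (field; lra). lra.
  - specialize (Hq (I1 / L)).
    replace (I2 - 2 * (I1 / L) * I1 + I1 / L * (I1 / L) * L) with (I2 - I1 * I1 / L) in Hq by (field; lra).
    assert (I1 * I1 / L * L = I1 * I1) by (field; lra).
    assert (0 <= (I2 - I1 * I1 / L) * L) by (apply Rmult_le_pos; lra). nra.
Qed.

Lemma integ_bound mu f M : ba A mu -> simple A f -> 0 <= M -> (forall x, Rabs (f x) <= M) ->
  Rabs (integ mu f) <= M * ba_norm A mu.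
Proof. intros Hmu Hf HM0 HM. pose proof (partition_lev Hf) as Hp.
  rewrite (integ_const_on Hmu Hf Hp (@const_lev f)). eapply Rle_trans; [apply lsum_abs|].
  apply Rle_trans with (M * sumabs mu (lev f)).
  - rewrite sumabs_lsum, <- lsum_scal. apply lsum_le. intros E HE. rewrite Rabs_mult.
    destruct (nonempty_or_empty E) as [[x Ex]|Hno].
    + rewrite (@fval_at _ E x Ex). rewrite Rmult_comm. apply Rmult_le_compat_r; auto. apply Rabs_pos.
      intros y Ey; apply (const_lev HE); auto.
    + rewrite (ba_is_empty Hmu Hno). rewrite Rabs_R0, Rmult_0_l, Rmult_0_r; lra.
  - apply Rmult_le_compat_l; auto. apply sumabs_le_norm; auto.
    rewrite Forall_forall; apply Hp. apply pdisj_pwd, Hp.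
Qed.

Lemma integ_mono_weights (m m' : T -> R) h : (forall y, y * m (fun x => h x = y) <= y * m' (fun x => h x = y)) ->
  integ m h <= integ m' h.
Proof. intro H. rewrite !integ_eq. apply lsum_le; auto. Qed.

Lemma integ_mono_measure (m m' : T -> R) h : simple A h -> (forall x, 0 <= h x) ->
  (forall E, A E -> 0 <= m E) -> (forall E, A E -> m E <= m' E) ->
  (forall E, is_empty E -> m E = 0 /\ m' E = 0) -> integ m h <= integ m' h.
Proof. intros Hs Hn H0 Hle Hemp. apply integ_mono_weights. intro y. destruct (Rle_dec 0 y).
  - apply Rmult_le_compat_l; auto. apply Hle, Hs.
  - assert (Hno : is_empty (fun x => h x = y)) by (intros x Hx; specialize (Hn x); lra).
    destruct (Hemp _ Hno) as [-> ->]. lra. Qed.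

Lemma integ_pos_mono l0 l1 h : pos l0 -> pos l1 -> (forall E, A E -> l0 E <= l1 E) -> simple A h ->
  (forall x, 0 <= h x) -> integ l0 h <= integ l1 h.
Proof. intros H0 H1 Hle Hs Hn. apply integ_mono_measure; auto. apply H0.
  intros E HE; split; apply ba_is_empty; auto; [apply H0|apply H1]. Qed.

Lemma integ_tv_le nu la h : ba A nu -> pos la -> dominated nu la -> simple A h -> (forall x, 0 <= h x) ->
  integ (tv A nu) h <= integ la h.
Proof. intros Hn Hl Hd Hs Hp. apply integ_mono_measure; auto.
  - intros E _. apply tv_nonneg; auto.
  - intros E HE. apply tv_le_majorant; auto.
  - intros E HE. rewrite (ba_is_empty (proj1 Hl) HE). split; auto.
    apply Rle_antisym; [|apply tv_nonneg; auto]. rewrite <- (ba_is_empty (proj1 Hl) HE).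
    apply tv_le_majorant; auto. rewrite (is_empty_eq HE). apply A_empty. Qed.

Lemma supnorm_lub (f : Omega -> R) M : (forall x, Rabs (f x) <= M) ->
  is_lub (fun r => r = 0 \/ exists x, r = Rabs (f x)) (supnorm f).
Proof. intro H. unfold supnorm. apply epsilon_spec.
  destruct (completeness (fun r => r = 0 \/ exists x, r = Rabs (f x))) as [m Hm].
  exists (Rmax 0 M). intros r [->|[x ->]]. apply Rmax_l. eapply Rle_trans; [apply H|apply Rmax_r].
  exists 0; left; auto. eauto. Qed.

Lemma supnorm_ge (f : Omega -> R) M x : (forall x, Rabs (f x) <= M) -> Rabs (f x) <= supnorm f.
Proof. intro H. apply (supnorm_lub H). right; eauto. Qed.

Lemma supnorm_nonneg (f : Omega -> R) M : (forall x, Rabs (f x) <= M) -> 0 <= supnorm f.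
Proof. intro H. apply (supnorm_lub H). left; auto. Qed.

Lemma supnorm_le (f : Omega -> R) M : 0 <= M -> (forall x, Rabs (f x) <= M) -> supnorm f <= M.
Proof. intros H0 H. apply (supnorm_lub H). intros r [->|[x ->]]; auto. Qed.

Section Martingale.
Variables mu la : T -> R.
Variable K : R.
Hypothesis Hmu : ba A mu.
Hypothesis Hla : pos la.
Hypothesis HK : 0 <= K.
Hypothesis Hd : forall E, A E -> Rabs (mu E) <= K * la E.

Definition dens (E : T) : R := if Req_dec_T (la E) 0 then 0 else mu E / la E.

Lemma dens_mul E : la E * dens E = mu E.
Proof. unfold dens. destruct (Req_dec_T (la E) 0) as [H|H]; [|field; auto].
  destruct (classic (A E)) as [HE|HE].
  - pose proof (Hd HE) as Hd'. rewrite H, Rmult_0_r in Hd'. pose proof (Rabs_pos (mu E)).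
    assert (Rabs (mu E) = 0) by lra. apply Rabs_le_between in Hd'. replace (mu E) with 0 by lra. ring.
  - rewrite (ba_out Hmu HE); ring. Qed.

Lemma dens_bound E : Rabs (dens E) <= K.
Proof. unfold dens. destruct (Req_dec_T (la E) 0) as [H|H]. rewrite Rabs_R0; auto.
  destruct (classic (A E)) as [HE|HE]; [|exfalso; apply H, (ba_out (proj1 Hla) HE)].
  pose proof (proj2 Hla E HE). pose proof (Hd HE) as Hd'. unfold Rdiv. rewrite Rabs_mult, Rabs_inv, (Rabs_right (la E)) by lra.
  apply Rmult_le_reg_r with (la E). lra. rewrite Rmult_assoc, Rinv_l; lra. Qed.

Lemma step_dens_bound p x : partition p -> Rabs (step p dens x) <= K.
Proof. intro Hp. destruct (proj2 (proj2 Hp) x) as [E [HE Ex]]. rewrite (step_at _ (proj1 (proj2 Hp)) HE Ex). apply dens_bound. Qed.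

Lemma integ_density s f : partition s -> const_on s f ->
  integ la (fun x => f x * step s dens x) = integ mu f.
Proof. intros Hs Hc. pose proof (proj1 (proj2 Hs)) as Hps.
  assert (Hc2 : const_on s (fun x => f x * step s dens x)).
  { intros C HC x y Cx Cy. rewrite (Hc C HC x y), (const_step dens Hps HC Cx Cy); auto. }
  rewrite (integ_const_on (proj1 Hla) (simple_of_partition Hs Hc2) Hs Hc2), (integ_const_on Hmu (simple_of_partition Hs Hc) Hs Hc).
  apply lsum_ext. intros C HC. destruct (nonempty_or_empty C) as [[x Cx]|Hno].
  - rewrite !(@fval_at _ C x Cx), (step_at _ Hps HC Cx), <- dens_mul. ring.
    intros y Cy; apply (Hc C HC); auto. intros y Cy; apply (Hc2 C HC); auto.
  - rewrite (ba_is_empty Hmu Hno), (ba_is_empty (proj1 Hla) Hno). ring. Qed.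

Definition energy p := integ la (fun x => step p dens x * step p dens x).
Definition osc s p := integ la (fun x => (step s dens x - step p dens x) * (step s dens x - step p dens x)).

Lemma simple_step2 p s (F : R -> R -> R) : partition p -> partition s ->
  simple A (fun x => F (step s dens x) (step p dens x)).
Proof. intros. apply simple_comb; apply simple_step; auto. Qed.

Lemma energy_bound p : partition p -> energy p <= K * K * la fullO.
Proof. intro Hp. unfold energy. rewrite <- (integ_const (K*K) (proj1 Hla)). apply integ_mono; auto.
  apply (simple_step2 Rmult); auto. apply simple_const. intro x. pose proof (step_dens_bound x Hp) as Hb.
  apply Rabs_le_between in Hb. nra. Qed.

Lemma osc_nonneg s p : partition s -> partition p -> 0 <= osc s p.
Proof. intros. apply integ_nonneg; auto. apply (simple_step2 (fun a b => (a - b) * (a - b))); auto.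
  intro; apply Rle_0_sqr. Qed.

Lemma integ_step_refines s p : partition s -> partition p -> refines s p ->
  integ la (fun x => step s dens x * step p dens x) = energy p.
Proof. intros Hs Hp Hr. unfold energy.
  replace (fun x => step s dens x * step p dens x) with (fun x => step p dens x * step s dens x)
    by (apply functional_extensionality; intro; ring).
  rewrite !integ_density; auto. apply const_step, Hp. apply const_step_refines; auto; apply Hp. Qed.

Lemma osc_pythagoras s p : partition s -> partition p -> refines s p -> osc s p = energy s - energy p.
Proof. intros Hs Hp Hr. unfold osc.
  replace (fun x => (step s dens x - step p dens x) * (step s dens x - step p dens x)) with
    (fun x => 1 * (1 * (step s dens x * step s dens x) + (-2) * (step s dens x * step p dens x)) + 1 * (step p dens x * step p dens x)).
  rewrite (integ_lin _ _ (proj1 Hla)), (integ_lin _ _ (proj1 Hla)), (integ_step_refines Hs Hp Hr). unfold energy; ring.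
  all: try (apply (simple_step2 Rmult); auto).
  apply (simple_step2 (fun a b => 1 * (a * a) + (-2) * (a * b))); auto.
  apply functional_extensionality; intro x; ring.
Qed.

Definition settled p eta := partition p /\ forall s, partition s -> refines s p -> osc s p <= eta.

(* Since the energy is bounded, every partition has a settled refinement. *)
Lemma settled_exists p0 eta : 0 < eta -> partition p0 -> exists p, refines p p0 /\ settled p eta.
Proof. intros He Hp0. set (Qs := fun r => exists p, partition p /\ r = energy p).
  destruct (completeness Qs) as [S HS].
  - exists (K * K * la fullO). intros r [p [Hp ->]]. apply energy_bound; auto.
  - exists (energy (fullO :: nil)), (fullO :: nil); split; auto. apply partition_full.
  - assert (exists p1, partition p1 /\ S - eta < energy p1) as [p1 [Hp1 Hq]].
    { apply NNPP; intro Hn. assert (S <= S - eta); [|lra]. apply HS. intros r [p [Hp ->]].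
      apply Rnot_lt_le; intro; apply Hn; eauto. }
    assert (Hm : partition (meet p0 p1)) by (apply partition_meet; auto).
    exists (meet p0 p1). split. apply refines_meet_l. split; auto. intros s Hs Hr.
    assert (energy s <= S) by (apply HS; exists s; auto).
    pose proof (osc_nonneg Hm Hp1) as Hn. rewrite osc_pythagoras in Hn |- *; auto. lra. apply refines_meet_r.
Qed.

Lemma settled_refine p p' eta : settled p eta -> partition p' -> refines p' p -> settled p' eta.
Proof. intros [Hp Hg] Hp' Hr. split; auto. intros s Hs Hr'. specialize (Hg s Hs (refines_trans Hr' Hr)).
  pose proof (osc_nonneg Hp' Hp) as Hn. rewrite osc_pythagoras in Hg, Hn |- *; auto. lra.
  apply (refines_trans Hr' Hr). Qed.

Lemma settled_L1 p eta s : settled p eta -> partition s -> refines s p ->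
  integ la (fun x => Rabs (step s dens x - step p dens x)) <= sqrt (la fullO * eta).
Proof. intros [Hp Hg] Hs Hr. apply le_sqrt_of_sq. apply integ_nonneg; auto.
  apply (simple_step2 (fun a b => Rabs (a - b))); auto. intro; apply Rabs_pos.
  eapply Rle_trans. apply (integ_cauchy_schwarz Hla (simple_step2 Rminus Hp Hs)).
  apply Rmult_le_compat_l. apply pos_full; auto. apply Hg; auto. Qed.

End Martingale.

Section Functional.
Variable phi : (T -> R) -> R.
Hypothesis Hlin : linear_on_ba A phi.

Lemma phi_zero : phi (fun _ => 0) = 0.
Proof. pose proof (Hlin 0 0 ba_zero ba_zero) as H. cbv beta in H.
  replace (fun E : T => 0 * 0 + 0 * 0) with (fun _ : T => 0) in H by (apply functional_extensionality; intro; ring).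
  rewrite H; ring. Qed.

Lemma phi_lsum {I} (m : I -> T -> R) l : (forall i, In i l -> ba A (m i)) ->
  phi (fun F => lsum (fun i => m i F) l) = lsum (fun i => phi (m i)) l.
Proof. induction l; intro H. apply phi_zero.
  replace (fun F => lsum (fun i => m i F) (a :: l)) with (fun F => 1 * m a F + 1 * lsum (fun i => m i F) l).
  rewrite Hlin, IHl, lsum_cons; auto with datatypes. ring. apply ba_lsum; auto with datatypes.
  apply functional_extensionality; intro F. rewrite lsum_cons. ring. Qed.

Lemma phi_sub mu nu : ba A mu -> ba A nu -> phi (fun E => nu E - mu E) = phi nu - phi mu.
Proof. intros. replace (fun E => nu E - mu E) with (fun E => 1 * nu E + (-1) * mu E). rewrite Hlin; auto. ring.
  apply functional_extensionality; intro; ring. Qed.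

Lemma phi_scale mu t : ba A mu -> phi (fun E => t * mu E) = t * phi mu.
Proof. intros. replace (fun E => t * mu E) with (fun E => t * mu E + 0 * mu E). rewrite Hlin; auto. ring.
  apply functional_extensionality; intro; ring. Qed.

Lemma phi_partition nu p : ba A nu -> partition p -> phi nu = lsum (fun E => phi (rest nu E)) p.
Proof. intros Hn Hp. rewrite <- phi_lsum by (intros E HE; apply ba_rest; auto; apply Hp; auto). f_equal.
  apply functional_extensionality; intro F. destruct (classic (A F)) as [HF|HF].
  - rewrite (ba_partition_sum Hn Hp HF). apply lsum_ext. intros E _. rewrite rest_in; auto.
  - rewrite (ba_out Hn HF), lsum_zero; auto. intros E _. unfold rest.
    destruct (excluded_middle_informative (A F)); [contradiction|auto]. Qed.

(* For the density [d] of [mu] w.r.t. [la] and weights [w] on the cells of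
   [p], the measure [dev w] measures how far [mu] is from [d_p la]. *)
Section Deviation.
Variables mu la : T -> R.
Hypothesis Hmu : ba A mu.
Hypothesis Hla : pos la.
Hypothesis Hd : forall E, A E -> Rabs (mu E) <= 1 * la E.
Variable p : list T.
Hypothesis Hp : partition p.
Variable w : T -> R.
Local Notation d := (dens mu la).

Definition dev : T -> R := fun F => lsum (fun E => w E * rest mu E F + (- (w E * d E)) * rest la E F) p.

Lemma ba_dev : ba A dev.
Proof. apply ba_lsum. intros E HE. apply ba_comb; apply ba_rest; auto; first [apply Hla | apply Hp; auto]. Qed.

Lemma phi_dev : phi dev = lsum (fun E => w E * (phi (rest mu E) - d E * phi (rest la E))) p.
Proof. unfold dev. rewrite phi_lsum.
  - apply lsum_ext. intros E HE. rewrite Hlin; [ring| |]; apply ba_rest; auto; first [apply Hla | apply Hp; auto].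
  - intros E HE. apply ba_comb; apply ba_rest; auto; first [apply Hla | apply Hp; auto]. Qed.

Lemma dev_cell C E0 : A C -> In E0 p -> sub C E0 -> dev C = w E0 * (la C * (d C - d E0)).
Proof. intros HC HE0 HCE. unfold dev. rewrite lsum_plus.
  rewrite (@lsum_ext _ (fun E => w E * rest mu E C) (fun E => w E * mu (inter C E))) by (intros; rewrite rest_in; auto).
  rewrite (@lsum_ext _ (fun E => - (w E * d E) * rest la E C) (fun E => - (w E * d E) * la (inter C E))) by (intros; rewrite rest_in; auto).
  pose proof (proj1 (proj2 Hp)) as Hpd.
  rewrite (ba_cell_sum Hmu w Hpd HE0 HCE), (ba_cell_sum (proj1 Hla) (fun E => - (w E * d E)) Hpd HE0 HCE).
  rewrite <- (dens_mul Hmu Hd C). ring. Qed.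

Lemma dev_refinement_sum s : (forall E, Rabs (w E) <= 1) -> partition s -> refines s p ->
  lsum (fun C => Rabs (dev C)) s <= integ la (fun x => Rabs (step s d x - step p d x)).
Proof. intros Hw Hs Hr. pose proof (proj1 (proj2 Hs)) as Hsd. pose proof (proj1 (proj2 Hp)) as Hpd.
  assert (Hc : const_on s (fun x => Rabs (step s d x - step p d x))).
  { intros C HC x y Cx Cy. rewrite (const_step d Hsd HC Cx Cy), (const_step_refines d Hpd Hr HC Cx Cy); auto. }
  rewrite (integ_const_on (proj1 Hla) (simple_of_partition Hs Hc) Hs Hc). apply lsum_le. intros C HC.
  destruct (nonempty_or_empty C) as [[x Cx]|Hno].
  - destruct (Hr C HC) as [E0 [HE0 HCE]].
    rewrite (@fval_at _ C x Cx) by (intros y Cy; apply (Hc C HC); auto).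
    rewrite (step_at _ Hsd HC Cx), (step_at _ Hpd HE0 (HCE x Cx)), (dev_cell (proj1 Hs C HC) HE0 HCE).
    rewrite Rabs_mult, Rabs_mult, (Rabs_right (la C)) by (apply Rle_ge, Hla, Hs; auto).
    assert (0 <= la C * Rabs (d C - d E0)) by (apply Rmult_le_pos; [apply Hla, Hs; auto|apply Rabs_pos]).
    specialize (Hw E0). pose proof (Rabs_pos (w E0)). nra.
  - rewrite (ba_is_empty ba_dev Hno), (ba_is_empty (proj1 Hla) Hno), Rabs_R0. lra.
Qed.

End Deviation.

Section Bounded.
Variable C : R.
Hypothesis HC0 : 0 <= C.
Hypothesis HC : forall mu, ba A mu -> Rabs (phi mu) <= C * ba_norm A mu.

Lemma dens_cross_estimate mu la p eta : ba A mu -> pos la -> (forall E, A E -> Rabs (mu E) <= 1 * la E) ->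
  settled mu la p eta ->
  lsum (fun E => Rabs (phi (rest mu E) - dens mu la E * phi (rest la E))) p <= C * sqrt (la fullO * eta).
Proof. intros Hmu Hla Hd [Hp Hset].
  set (X := fun E => phi (rest mu E) - dens mu la E * phi (rest la E)).
  set (sg := fun E => if Rle_dec 0 (X E) then 1 else -1).
  assert (Hsg : forall E, Rabs (sg E) <= 1) by (intro E; unfold sg; destruct (Rle_dec 0 (X E)); unfold Rabs; destruct (Rcase_abs _); lra).
  assert (HX : lsum (fun E => Rabs (X E)) p = phi (dev mu la p sg)).
  { rewrite (phi_dev Hmu Hla Hp). apply lsum_ext. intros E _. fold (X E).
    unfold sg. destruct (Rle_dec 0 (X E)); [rewrite Rabs_right by lra|rewrite Rabs_left by lra]; ring. }
  change (lsum (fun E => Rabs (X E)) p <= C * sqrt (la fullO * eta)). rewrite HX.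
  eapply Rle_trans; [apply Rle_abs|]. eapply Rle_trans; [apply HC, (ba_dev Hmu Hla Hp sg)|].
  apply Rmult_le_compat_l; auto. apply (ba_norm_le_refinements (ba_dev Hmu Hla Hp sg) Hp).
  intros s Hs Hr. eapply Rle_trans. apply dev_refinement_sum; auto.
  apply (settled_L1 Hla (conj Hp Hset) Hs Hr).
Qed.

Definition tau (la : T -> R) : T -> R := fun E => if excluded_middle_informative (A E) then phi (rest la E) else 0.

Lemma tau_in la E : A E -> tau la E = phi (rest la E).
Proof. intro HE. unfold tau. destruct (excluded_middle_informative (A E)); [auto|contradiction]. Qed.

Lemma tau_dominated la : pos la -> forall E, A E -> Rabs (tau la E) <= C * la E.
Proof. intros Hl E HE. rewrite tau_in by auto. eapply Rle_trans. apply HC, ba_rest; auto. apply Hl.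
  apply Rmult_le_compat_l; auto. apply norm_rest; auto. Qed.

Lemma ba_tau la : pos la -> ba A (tau la).
Proof. intro Hl. split; [|split].
  - intros E G HE HG Hdis. assert (HEG : A (union E G)) by (apply A_union; auto). rewrite !tau_in; auto.
    replace (rest la (union E G)) with (fun F => 1 * rest la E F + 1 * rest la G F).
    rewrite Hlin; [ring| |]; apply ba_rest; auto; apply Hl.
    apply functional_extensionality; intro F. unfold rest. destruct (excluded_middle_informative (A F)); [|ring].
    rewrite !Rmult_1_l, <- (ba_add (proj1 Hl)). f_equal. apply set_ext; unfold inter, union; intro x; tauto.
    apply A_inter; auto. apply A_inter; auto. intros x [[_ ?] [_ ?]]; apply (Hdis x); auto.
  - exists (C * la fullO). intros E HE. eapply Rle_trans. apply tau_dominated; auto. apply Rmult_le_compat_l; auto.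
    apply pos_mono; auto. apply A_full. intros x _; exact I.
  - intros E HE. unfold tau. destruct (excluded_middle_informative (A E)); [contradiction|reflexivity].
Qed.

Definition kd (la : T -> R) := dens (tau la) la.

Lemma kd_mul la E : pos la -> A E -> la E * kd la E = phi (rest la E).
Proof. intros Hl HE. unfold kd. rewrite (dens_mul (ba_tau Hl) (tau_dominated Hl)). apply tau_in; auto. Qed.

Lemma settled_kd_exists la p0 eta : pos la -> 0 < eta -> partition p0 ->
  exists p, refines p p0 /\ settled (tau la) la p eta.
Proof. intros Hl He Hp0. apply (settled_exists (ba_tau Hl) Hl HC0 (tau_dominated Hl) He Hp0). Qed.

Lemma settled_pos_exists la lb p0 eta : pos la -> pos lb -> (forall E, A E -> la E <= lb E) -> 0 < eta ->
  partition p0 -> exists rho, refines rho p0 /\ settled la lb rho eta.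
Proof. intros Ha Hb Hab He Hp. apply (settled_exists (proj1 Ha) Hb Rle_0_1 (pos_le_dominated Ha Hab) He Hp). Qed.

Lemma kd_refine_close l0 la p s eta : pos l0 -> pos la -> (forall E, A E -> l0 E <= la E) ->
  settled (tau la) la p eta -> partition s -> refines s p ->
  integ l0 (fun x => Rabs (step p (kd la) x - step s (kd la) x)) <= sqrt (l0 fullO * eta).
Proof. intros H0 Hl Hle [Hp Hset] Hs Hr.
  assert (Hsd : simple A (fun x => step p (kd la) x - step s (kd la) x)) by (apply simple_comb; apply simple_step; auto).
  apply le_sqrt_of_sq. apply integ_nonneg; auto. apply simple_map; auto. intro; apply Rabs_pos.
  eapply Rle_trans. apply (integ_cauchy_schwarz H0 Hsd). apply Rmult_le_compat_l. apply pos_full; auto.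
  eapply Rle_trans; [|apply (Hset s Hs Hr)]. unfold osc.
  replace (fun x => (step s (dens (tau la) la) x - step p (dens (tau la) la) x) * (step s (dens (tau la) la) x - step p (dens (tau la) la) x))
    with (fun x => (step p (kd la) x - step s (kd la) x) * (step p (kd la) x - step s (kd la) x))
    by (apply functional_extensionality; intro x; unfold kd; ring).
  apply integ_pos_mono; auto. apply (simple_comb Rmult); auto. intro; apply Rle_0_sqr.
Qed.

Lemma kd_compare l0 la lb rho eta : pos l0 -> pos la -> pos lb ->
  (forall E, A E -> l0 E <= la E) -> (forall E, A E -> la E <= lb E) -> settled la lb rho eta ->
  integ l0 (fun x => Rabs (step rho (kd la) x - step rho (kd lb) x)) <= C * sqrt (lb fullO * eta).
Proof. intros H0 Ha Hb H0a Hab Hset. pose proof (proj1 Hset) as Hp.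
  pose proof (pos_le_dominated Ha Hab) as Hd.
  replace (fun x => Rabs (step rho (kd la) x - step rho (kd lb) x))
    with (step rho (fun E => Rabs (kd la E - kd lb E))) by (apply functional_extensionality; intro x;
      rewrite (step_comb (fun u v => Rabs (u - v))); auto).
  eapply Rle_trans. apply (integ_pos_mono H0 Ha H0a (simple_step _ Hp)).
  { intro x. destruct (proj2 (proj2 Hp) x) as [E [HE Ex]]. rewrite (step_at _ (proj1 (proj2 Hp)) HE Ex). apply Rabs_pos. }
  rewrite (integ_step _ (proj1 Ha) Hp).
  eapply Rle_trans; [|apply (dens_cross_estimate (proj1 Ha) Hb Hd Hset)]. apply lsum_le. intros E HE.
  assert (AE : A E) by (apply Hp; auto).
  rewrite <- (kd_mul Ha AE), <- (kd_mul Hb AE).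
  replace (dens la lb E * (lb E * kd lb E)) with (la E * kd lb E) by (rewrite <- (dens_mul (proj1 Ha) Hd E); ring).
  rewrite <- Rmult_minus_distr_l, Rabs_mult, (Rabs_right (la E)); [lra|].
  apply Rle_ge, Ha; auto.
Qed.

Lemma integ_kd_approx nu la rho eta : ba A nu -> pos la -> (forall E, A E -> Rabs (nu E) <= 1 * la E) ->
  settled nu la rho eta -> Rabs (integ nu (step rho (kd la)) - phi nu) <= C * sqrt (la fullO * eta).
Proof. intros Hn Hl Hd Hset. pose proof (proj1 Hset) as Hp.
  eapply Rle_trans; [|apply (dens_cross_estimate Hn Hl Hd Hset)].
  rewrite (integ_step _ Hn Hp), (phi_partition Hn Hp), Rabs_minus_sym, <- lsum_minus.
  eapply Rle_trans; [apply lsum_abs|]. right. apply lsum_ext. intros E HE. assert (AE : A E) by (apply Hp; auto).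
  rewrite <- (kd_mul Hl AE), <- (dens_mul Hn Hd E) at 1. f_equal. ring.
Qed.

Definition index := {q : (T -> R) * R | pos (fst q) /\ 0 < snd q}.
Definition lam (a : index) := fst (proj1_sig a).
Definition tol (a : index) := snd (proj1_sig a).
Definition index_le (a b : index) := (forall E, A E -> lam a E <= lam b E) /\ tol b <= tol a.

Lemma lam_pos a : pos (lam a). Proof. exact (proj1 (proj2_sig a)). Qed.
Lemma tol_pos a : 0 < tol a. Proof. exact (proj2 (proj2_sig a)). Qed.

Definition mk_index la d (Hl : pos la) (Hd : 0 < d) : index := exist _ (la, d) (conj Hl Hd).

Lemma index_directed : directed index_le.
Proof. split; [|split; [|split]].
  - constructor. exact (mk_index pos_zero Rlt_0_1).
  - intro a; split; [intros; lra|lra].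
  - intros a b c [H1 H2] [H3 H4]. split; [|lra]. intros E HE; specialize (H1 E HE); specialize (H3 E HE); lra.
  - intros a b. pose proof (lam_pos a) as Ha. pose proof (lam_pos b) as Hb.
    assert (Hm : 0 < Rmin (tol a) (tol b)) by (apply Rmin_glb_lt; apply tol_pos).
    exists (mk_index (pos_add Ha Hb) Hm). unfold index_le.
    change (lam (mk_index _ Hm)) with (fun E => lam a E + lam b E). change (tol (mk_index _ Hm)) with (Rmin (tol a) (tol b)).
    split; split; try apply Rmin_l; try apply Rmin_r;
      intros E HE; pose proof (proj2 Ha E HE); pose proof (proj2 Hb E HE); lra.
Qed.

Definition pid (a : index) := epsilon (inhabits nil) (fun p => settled (tau (lam a)) (lam a) p (tol a)).

Lemma pid_settled a : settled (tau (lam a)) (lam a) (pid a) (tol a).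
Proof. unfold pid. apply epsilon_spec.
  destruct (settled_kd_exists (lam_pos a) (tol_pos a) partition_full) as [p [_ Hp]]. eauto. Qed.

Lemma pid_partition a : partition (pid a). Proof. exact (proj1 (pid_settled a)). Qed.

Definition fnet (a : index) : Omega -> R := step (pid a) (kd (lam a)).

Lemma fnet_simple a : simple A (fnet a).
Proof. apply simple_step, pid_partition. Qed.

Lemma fnet_bound a x : Rabs (fnet a x) <= C.
Proof. eapply step_dens_bound; eauto using lam_pos, tau_dominated, pid_partition. Qed.

Lemma fnet_close a l0 lc rho e : pos l0 -> pos lc -> 0 < e ->
  (forall E, A E -> l0 E <= lam a E) -> tol a <= e * e / (l0 fullO + 1) ->
  (forall E, A E -> lam a E <= lc E) -> refines rho (pid a) ->
  settled (lam a) lc rho ((e / (C + 1)) * (e / (C + 1)) / (lc fullO + 1)) ->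
  integ l0 (fun x => Rabs (fnet a x - step rho (kd lc) x)) <= 2 * e.
Proof. intros H0 Hc He Hl0 Htol Hlc Hr Hset. pose proof (lam_pos a) as Ha. pose proof (proj1 Hset) as Hrho.
  set (g := step rho (kd (lam a))).
  assert (Sf : simple A (fnet a)) by apply fnet_simple.
  assert (Sg : simple A g) by (apply simple_step; auto).
  assert (Sh : simple A (step rho (kd lc))) by (apply simple_step; auto).
  eapply Rle_trans. apply (integ_mono H0 (simple_abs_diff Sf Sh) (simple_comb Rplus (simple_abs_diff Sf Sg) (simple_abs_diff Sg Sh))).
  intro x; apply Rabs_tri. rewrite integ_add; try apply simple_abs_diff; auto; [|apply H0].
  assert (T1 : integ l0 (fun x => Rabs (fnet a x - g x)) <= e).
  { eapply Rle_trans. apply (kd_refine_close H0 Ha Hl0 (pid_settled a) Hrho Hr).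
    eapply Rle_trans; [|apply (sqrt_tolerance (pos_full H0) He)]. apply sqrt_le_1_alt.
    apply Rmult_le_compat_l; auto. apply pos_full; auto. }
  assert (T2 : integ l0 (fun x => Rabs (g x - step rho (kd lc) x)) <= e).
  { eapply Rle_trans. apply (kd_compare H0 Ha Hc Hl0 Hlc Hset).
    apply sqrt_tolerance_scaled; auto. apply pos_full; auto. }
  lra.
Qed.

Lemma fnet_cauchy nu : ba A nu -> net_cauchy_L1 A index_le nu fnet.
Proof. intros Hn eps Heps. destruct (ba_majorant Hn) as [l0 [H0 Hd0]].
  set (e := eps / 8). assert (He : 0 < e) by (unfold e; lra).
  exists (mk_index H0 (tolerance_pos (pos_full H0) He)). intros a1 a2 Ha1 Ha2.
  destruct Ha1 as [L1 D1], Ha2 as [L2 D2].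
  pose proof (lam_pos a1) as Hl1. pose proof (lam_pos a2) as Hl2.
  set (lc := fun E => lam a1 E + lam a2 E). assert (Hc : pos lc) by (apply pos_add; auto).
  assert (H1c : forall E, A E -> lam a1 E <= lc E) by (intros E HE; unfold lc; pose proof (proj2 Hl2 E HE); lra).
  assert (H2c : forall E, A E -> lam a2 E <= lc E) by (intros E HE; unfold lc; pose proof (proj2 Hl1 E HE); lra).
  set (eta := (e / (C + 1)) * (e / (C + 1)) / (lc fullO + 1)).
  assert (Heta : 0 < eta) by (apply tolerance_pos; [apply pos_full; auto|apply Rdiv_lt_0_compat; lra]).
  destruct (settled_pos_exists Hl1 Hc H1c Heta (partition_meet (pid_partition a1) (pid_partition a2))) as [r1 [Hr1 Hs1]].
  destruct (settled_pos_exists Hl2 Hc H2c Heta (proj1 Hs1)) as [rho [Hr Hs2]].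
  assert (Hs1' : settled (lam a1) lc rho eta) by (apply (settled_refine (proj1 Hl1) Hc (pos_le_dominated Hl1 H1c) Hs1 (proj1 Hs2) Hr)).
  assert (Hrm : refines rho (meet (pid a1) (pid a2))) by apply (refines_trans Hr Hr1).
  pose proof (fnet_close H0 Hc He L1 D1 H1c (refines_trans Hrm (@refines_meet_l (pid a1) (pid a2))) Hs1') as C1.
  pose proof (fnet_close H0 Hc He L2 D2 H2c (refines_trans Hrm (@refines_meet_r (pid a1) (pid a2))) Hs2) as C2.
  assert (Sf1 : simple A (fnet a1)) by apply fnet_simple. assert (Sf2 : simple A (fnet a2)) by apply fnet_simple.
  assert (Sg : simple A (step rho (kd lc))) by (apply simple_step; apply Hs2).
  apply Rle_lt_trans with (integ l0 (fun x => Rabs (fnet a1 x - fnet a2 x))).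
  { apply integ_tv_le; auto. apply simple_abs_diff; auto. intro; apply Rabs_pos. }
  eapply Rle_lt_trans. apply (integ_mono H0 (simple_abs_diff Sf1 Sf2) (simple_comb Rplus (simple_abs_diff Sf1 Sg) (simple_abs_diff Sf2 Sg))).
  intro x. rewrite (Rabs_minus_sym (fnet a2 x)). apply Rabs_tri.
  rewrite integ_add; try apply simple_abs_diff; auto; [|apply H0]. unfold e in *. lra.
Qed.

Lemma fnet_limit nu : ba A nu -> net_lim index_le (fun a => integ nu (fnet a)) (phi nu).
Proof. intros Hn eps Heps. destruct (ba_majorant Hn) as [l0 [H0 Hd0]].
  set (e := eps / 4). assert (He : 0 < e) by (unfold e; lra).
  exists (mk_index H0 (tolerance_pos (pos_full H0) He)). intros a [L1 D1].
  pose proof (lam_pos a) as Hl.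
  assert (Hd : forall E, A E -> Rabs (nu E) <= 1 * lam a E)
    by (intros E HE; rewrite Rmult_1_l; eapply Rle_trans; [apply Hd0; auto|apply L1; auto]).
  set (eta := (e / (C + 1)) * (e / (C + 1)) / (lam a fullO + 1)).
  assert (Heta : 0 < eta) by (apply tolerance_pos; [apply pos_full; auto|apply Rdiv_lt_0_compat; lra]).
  destruct (settled_exists Hn Hl Rle_0_1 Hd Heta (pid_partition a)) as [rho [Hr Hset]].
  set (g := step rho (kd (lam a))). assert (Sg : simple A g) by (apply simple_step, Hset).
  assert (Sf : simple A (fnet a)) by apply fnet_simple.
  replace (integ nu (fnet a) - phi nu) with (integ nu (fun x => fnet a x - g x) + (integ nu g - phi nu))
    by (rewrite (integ_sub Hn Sf Sg); ring).
  eapply Rle_lt_trans; [apply Rabs_triang|].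
  assert (T1 : Rabs (integ nu (fun x => fnet a x - g x)) <= e).
  { eapply Rle_trans. apply (integ_abs_dominated Hn H0 Hd0). apply (simple_comb Rminus); auto.
    eapply Rle_trans. apply (kd_refine_close H0 Hl L1 (pid_settled a) (proj1 Hset) Hr).
    eapply Rle_trans; [|apply (sqrt_tolerance (pos_full H0) He)]. apply sqrt_le_1_alt.
    apply Rmult_le_compat_l; auto. apply pos_full; auto. }
  assert (T2 : Rabs (integ nu g - phi nu) <= e).
  { eapply Rle_trans. apply (integ_kd_approx Hn Hl Hd Hset). apply sqrt_tolerance_scaled; auto. apply pos_full; auto. }
  unfold e in *. lra.
Qed.

End Bounded.

Lemma bounded_continuous B : 0 <= B -> (forall nu, ba A nu -> Rabs (phi nu) <= B * ba_norm A nu) ->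
  norm_continuous A phi.
Proof. intros HB Hb mu Hmu eps Heps. exists (eps / (B + 1)). split. apply Rdiv_lt_0_compat; lra.
  intros nu Hnu Hn. rewrite <- (phi_sub Hmu Hnu). eapply Rle_lt_trans. apply Hb, ba_sub; auto.
  pose proof (ba_norm_nonneg (ba_sub Hmu Hnu)). set (n := ba_norm A (fun E => nu E - mu E)) in *.
  assert (n * (B + 1) < eps).
  { apply Rmult_lt_reg_r with (/ (B + 1)). apply Rinv_0_lt_compat; lra.
    rewrite Rmult_assoc, Rinv_r, Rmult_1_r by lra. exact Hn. }
  nra.
Qed.

Lemma ball_bounded d : 0 < d -> (forall nu, ba A nu -> ba_norm A nu < d -> Rabs (phi nu) < 1) ->
  forall nu, ba A nu -> Rabs (phi nu) <= 2 / d * ba_norm A nu.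
Proof. intros Hd Hball nu Hn.
  assert (Hscaled : forall t, 0 < t -> t * ba_norm A nu < d -> t * Rabs (phi nu) < 1).
  { intros t Ht Htn. rewrite <- (Rabs_right t) at 1 by lra. rewrite <- Rabs_mult, <- (phi_scale t Hn).
    apply Hball. apply ba_scale; auto. eapply Rle_lt_trans; [apply ba_norm_scale; auto|]. rewrite Rabs_right; lra. }
  pose proof (ba_norm_nonneg Hn). set (n := ba_norm A nu) in *.
  destruct (Req_dec_T n 0) as [H0|H0].
  - rewrite H0, Rmult_0_r. destruct (Req_dec_T (phi nu) 0) as [Hp|Hp]; [rewrite Hp, Rabs_R0; lra|].
    assert (Hpa : 0 < Rabs (phi nu)) by (apply Rabs_pos_lt; auto).
    specialize (Hscaled (2 / Rabs (phi nu))). rewrite H0, Rmult_0_r in Hscaled.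
    assert (2 / Rabs (phi nu) * Rabs (phi nu) = 2) by (field; lra).
    assert (2 / Rabs (phi nu) * Rabs (phi nu) < 1) by (apply Hscaled; [apply Rdiv_lt_0_compat|]; lra). lra.
  - assert (Hnp : 0 < n) by lra.
    specialize (Hscaled (d / (2 * n))). replace (d / (2 * n) * n) with (d / 2) in Hscaled by (field; lra).
    assert (Hlt : d / (2 * n) * Rabs (phi nu) < 1) by (apply Hscaled; [apply Rdiv_lt_0_compat|]; lra).
    apply Rlt_le. apply Rmult_lt_reg_l with (d / (2 * n)). apply Rdiv_lt_0_compat; lra.
    replace (d / (2 * n) * (2 / d * n)) with 1 by (field; lra). lra.
Qed.

(* conversely, a norm continuous [phi] is bounded (continuity at 0 and scaling) *)
Lemma continuous_bounded : norm_continuous A phi ->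
  exists B, 0 <= B /\ forall nu, ba A nu -> Rabs (phi nu) <= B * ba_norm A nu.
Proof. intro Hnc. destruct (Hnc (fun _ => 0) ba_zero 1 Rlt_0_1) as [d [Hd Hdel]].
  exists (2 / d). split. apply Rlt_le, Rdiv_lt_0_compat; lra. apply ball_bounded; auto.
  intros nu Hn Hnn. specialize (Hdel nu Hn). rewrite phi_zero, Rminus_0_r in Hdel. apply Hdel.
  replace (fun E => nu E - 0) with nu; auto. apply functional_extensionality; intro; ring. Qed.

Lemma opnorm_lub B : 0 <= B -> (forall nu, ba A nu -> Rabs (phi nu) <= B * ba_norm A nu) ->
  is_lub (fun r => exists mu, ba A mu /\ ba_norm A mu <= 1 /\ r = Rabs (phi mu)) (opnorm A phi).
Proof. intros HB Hb. unfold opnorm. apply epsilon_spec.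
  destruct (completeness (fun r => exists mu, ba A mu /\ ba_norm A mu <= 1 /\ r = Rabs (phi mu))) as [m Hm].
  - exists B. intros r [mu [Hmu [Hn ->]]]. eapply Rle_trans. apply Hb; auto. pose proof (ba_norm_nonneg Hmu). nra.
  - exists (Rabs (phi (fun _ => 0))), (fun _ => 0). split. apply ba_zero. split; auto. rewrite ba_norm_zero; lra.
  - eauto. Qed.

Lemma opnorm_bound B : 0 <= B -> (forall nu, ba A nu -> Rabs (phi nu) <= B * ba_norm A nu) ->
  0 <= opnorm A phi /\ forall mu, ba A mu -> Rabs (phi mu) <= opnorm A phi * ba_norm A mu.
Proof. intros HB Hb. pose proof (opnorm_lub HB Hb) as Hl. split.
  - rewrite <- Rabs_R0, <- phi_zero. apply Hl. exists (fun _ => 0). split. apply ba_zero. split; auto. rewrite ba_norm_zero; lra.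
  - intros mu Hmu. pose proof (ba_norm_nonneg Hmu). set (n := ba_norm A mu) in *.
    destruct (Req_dec_T n 0) as [H0|H0].
    + pose proof (Hb mu Hmu) as Hbm. fold n in Hbm. rewrite H0, Rmult_0_r in *. auto.
    + assert (Hin : 0 < / n) by (apply Rinv_0_lt_compat; lra).
      assert (Hle : Rabs (phi (fun E => / n * mu E)) <= opnorm A phi).
      { apply Hl. exists (fun E => / n * mu E). split. apply ba_scale; auto. split; auto.
        eapply Rle_trans. apply (ba_norm_scale (/ n) Hmu). fold n. rewrite Rabs_right, Rinv_l; lra. }
      rewrite (phi_scale _ Hmu), Rabs_mult, Rabs_right in Hle by lra.
      apply Rmult_le_reg_l with (/ n); auto. replace (/ n * (opnorm A phi * n)) with (opnorm A phi) by (field; lra). lra.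
Qed.

Lemma net_limit_bounded (D : Type) (le : D -> D -> Prop) (f : D -> Omega -> R) M :
  directed le -> (forall a, simple A (f a)) -> 0 <= M -> (forall a x, Rabs (f a x) <= M) ->
  (forall mu, ba A mu -> net_lim le (fun a => integ mu (f a)) (phi mu)) ->
  forall nu, ba A nu -> Rabs (phi nu) <= M * ba_norm A nu.
Proof. intros [_ [Hrefl _]] Hs HM0 HM Hl nu Hn. apply Rle_plus_epsilon. intros eps Heps.
  destruct (Hl nu Hn eps Heps) as [a0 Ha0]. specialize (Ha0 a0 (Hrefl a0)). cbv beta in Ha0.
  pose proof (integ_bound Hn (Hs a0) HM0 (HM a0)). pose proof (Rabs_triang_inv (phi nu) (integ nu (f a0))).
  rewrite Rabs_minus_sym in Ha0. lra. Qed.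

(* For [phi] bounded by its norm [C], [limsup ||f_a||_oo = C]: the net is
   bounded by [C], and [mu(f_a)] approaches [|phi mu|] close to [C] for some
   [||mu|| <= 1]. *)
Lemma fnet_limsup C (HC0 : 0 <= C) (HC : forall mu, ba A mu -> Rabs (phi mu) <= C * ba_norm A mu) :
  is_lub (fun r => exists mu, ba A mu /\ ba_norm A mu <= 1 /\ r = Rabs (phi mu)) C ->
  net_limsup index_le (fun a => supnorm (fnet a)) C.
Proof. intros Hlub eps Heps. pose proof (fnet_bound HC0 HC) as Hbd. split.
  - destruct index_directed as [[a0] _]. exists a0. intros a _.
    pose proof (supnorm_le HC0 (Hbd a)). lra.
  - intros a0. assert (exists mu, ba A mu /\ ba_norm A mu <= 1 /\ C - eps / 2 < Rabs (phi mu)) as [mu [Hmu [Hnm Hgt]]].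
    { apply NNPP; intro Hn. assert (C <= C - eps / 2); [|lra]. apply Hlub. intros r [mu [Hmu [Hnm ->]]].
      apply Rnot_lt_le; intro; apply Hn; eauto. }
    destruct (fnet_limit HC0 HC Hmu (eps := eps / 2)) as [a1 Ha1]; [lra|].
    destruct index_directed as [_ [_ [_ Hub]]]. destruct (Hub a0 a1) as [a [H0a H1a]].
    exists a. split; auto. specialize (Ha1 a H1a). cbv beta in Ha1.
    pose proof (supnorm_nonneg (Hbd a)) as Hs0.
    pose proof (integ_bound Hmu (fnet_simple HC0 HC a) Hs0 (fun x => supnorm_ge x (Hbd a))).
    pose proof (ba_norm_nonneg Hmu).
    assert (supnorm (fnet a) * ba_norm A mu <= supnorm (fnet a)) by nra.
    pose proof (Rabs_triang_inv (phi mu) (integ mu (fnet a))). rewrite Rabs_minus_sym in Ha1. lra.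
Qed.

End Functional.
End Algebra.

Theorem mainTheorem10 (Omega : Type) (A : (Omega -> Prop) -> Prop)
  (HA : algebra A) (phi : ((Omega -> Prop) -> R) -> R)
  (Hlin : linear_on_ba A phi) :
  norm_continuous A phi <->
  exists (D : Type) (le : D -> D -> Prop) (f : D -> Omega -> R),
    directed le /\
    (forall a, simple A (f a)) /\
    unif_bounded f /\
    (forall mu, ba A mu -> net_cauchy_L1 A le mu f) /\
    net_limsup le (fun a => supnorm (f a)) (opnorm A phi) /\
    (forall mu, ba A mu -> net_lim le (fun a => integ mu (f a)) (phi mu)).
Proof. split.
  - intro Hnc. destruct (continuous_bounded HA Hlin Hnc) as [B [HB Hb]].
    destruct (opnorm_bound HA Hlin HB Hb) as [HC0 HC].
    exists (index A), (@index_le _ A), (fnet phi).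
    split; [|split; [|split; [|split; [|split]]]].
    + apply index_directed.
    + apply (fnet_simple HA Hlin HC0 HC).
    + exists (opnorm A phi). apply (fnet_bound HA Hlin HC0 HC).
    + intros mu Hmu. apply (fnet_cauchy HA Hlin HC0 HC Hmu).
    + apply (fnet_limsup HA Hlin HC0 HC (opnorm_lub HA HB Hb)).
    + intros mu Hmu. apply (fnet_limit HA Hlin HC0 HC Hmu).
  - intros [D [le [f [Hdir [Hs [[M HM] [_ [_ Hl]]]]]]]].
    apply (bounded_continuous HA Hlin (Rabs_pos M)).
    apply (net_limit_bounded HA Hdir Hs (Rabs_pos M)); auto.
    intros a x. eapply Rle_trans; [apply HM|apply RRle_abs].
Qed.
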